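(* Let $m\geq1$ be an odd integer and $n>1$ an integer such that $\mathcal{A}_{m,n}:=m2^n-1$ is prime. Let $t\in\mathbb{F}_{\mathcal{A}_{m,n}}$ be such that $t^2+1$ is not a square in $\mathbb{F}_{\mathcal{A}_{m,n}}$, and let $E_t/\mathbb{F}_{\mathcal{A}_{m,n}}$ be the elliptic curve $y^2=x^3-(t^2+1)x$. Then the point $m\cdot(-1,t)$ generates the $2$-Sylow subgroup of $E_t(\mathbb{F}_{\mathcal{A}_{m,n}})$. *)

From mathcomp Require Import all_boot all_algebra.
Set Implicit Arguments. Unset Strict Implicit. Unset Printing Implicit Defensive.
Import GRing.Theory.
Local Open Scope ring_scope.

(* points of the projective curve: None = point at infinity O *)
Definition ec_point (F : fieldType) := option (F * F)%type.

Definition on_curve (F : fieldType) (a b : F) (P : ec_point F) : bool :=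
  match P with
  | None => true
  | Some (x, y) => y ^+ 2 == x ^+ 3 + a * x + b
  end.

(* the usual chord-and-tangent group law (valid for char F <> 2,3) *)
Definition ec_add (F : fieldType) (a : F) (P Q : ec_point F) : ec_point F :=
  match P, Q with
  | None, _ => Q
  | _, None => P
  | Some (x1, y1), Some (x2, y2) =>
    if x1 == x2 then
      if y1 == - y2 then None
      else
        let l := (3%:R * x1 ^+ 2 + a) / (2%:R * y1) in
        let x3 := l ^+ 2 - x1 - x2 in
        Some (x3, l * (x1 - x3) - y1)
    else
      let l := (y2 - y1) / (x2 - x1) in
      let x3 := l ^+ 2 - x1 - x2 in
      Some (x3, l * (x1 - x3) - y1)
  end.

Definition ec_mul (F : fieldType) (a : F) (k : nat) (P : ec_point F) : ec_point F :=
  iter k (ec_add a P) None.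

(* membership in the 2-Sylow subgroup of E(F) for a finite field F: the points
   of E(F) of 2-power order (in a finite abelian group the Sylow 2-subgroup is
   exactly its 2-primary part) *)
Definition in_2sylow (F : fieldType) (a b : F) (P : ec_point F) : Prop :=
  on_curve a b P /\ exists k : nat, ec_mul a (2 ^ k) P = None.

Definition generates_2sylow (F : fieldType) (a b : F) (Q : ec_point F) : Prop :=
  in_2sylow a b Q /\ forall P, in_2sylow a b P -> exists j : nat, P = ec_mul a j Q.

(* Since m 2^n - 1 = 3 mod 4, -1 is not a square in F_p, so a = -(t^2 + 1) is a
   nonzero square r^2, and 2r or -2r is a square w^2.  The map
   (x, y) |-> (w y / (x^2 + r^2), (x - r) / (x + r)) identifies E_t with the Edwards
   curve u^2 + v^2 = 1 - u^2 v^2, whose addition law never divides by zero because -1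
   is not a square; associativity becomes a polynomial identity modulo the curve
   equations, so E_t(F_p) is an abelian group.
   As x |-> x^3 + a x is odd and exactly one of c, -c is a nonzero square for c != 0,
   E_t has p + 1 = m 2^n points.  Its only point of order 2 is (0, 0), so the 2-Sylow
   subgroup S is cyclic.  The x-coordinate of a double is a square, ((x^2 - a)/2y)^2,
   so P = (-1, t) is not a double; hence the 2-component of P generates S, and so does
   m P, in which the odd component vanishes. *)

From HB Require Import structures.
From mathcomp Require Import all_boot all_algebra all_fingroup all_solvable.
From mathcomp Require Import finfield ring zify.
Set Implicit Arguments. Unset Strict Implicit. Unset Printing Implicit Defensive.
Import GRing.Theory.
Local Open Scope ring_scope.

Section PolynomialCertificates.
Variable F : idomainType.

(* Each identity below is proved by a certificate: d (u - v) is written as a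
   combination of the hypotheses, with cofactors found by Groebner basis reduction,
   where d is a product of quantities assumed nonzero. *)

Lemma eq_of_certificate (d u v e : F) :
  d != 0 -> e = 0 -> d * (u - v) = e -> u = v.
Proof. by move=> d0 -> /eqP; rewrite mulf_eq0 (negbTE d0) subr_eq0 => /eqP. Qed.

Lemma subr0_of_eq (u v : F) : u = v -> u - v = 0.
Proof. by move->; rewrite subrr. Qed.

Ltac nonzero := repeat match goal with
  | |- is_true (_ * _ != 0) => first [assumption | apply: mulf_neq0]
  | |- is_true (_ ^+ _ != 0) => apply: expf_neq0
  | |- _ => assumption
  end.

Ltac certificate d e :=
  intros; apply: (@eq_of_certificate d _ _ e);
  [ nonzero
  | repeat match goal with H : _ = _ |- _ => rewrite (subr0_of_eq H) end; ring
  | ring ].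

Lemma edwards_assoc_x (x1 y1 x2 y2 x3 y3 X12 Y12 X23 Y23 L R : F) :
  x1 ^+ 2 + y1 ^+ 2 = 1 - x1 ^+ 2 * y1 ^+ 2 ->
  x2 ^+ 2 + y2 ^+ 2 = 1 - x2 ^+ 2 * y2 ^+ 2 ->
  x3 ^+ 2 + y3 ^+ 2 = 1 - x3 ^+ 2 * y3 ^+ 2 ->
  X12 * (1 - x1 * x2 * y1 * y2) = x1 * y2 + y1 * x2 ->
  Y12 * (1 + x1 * x2 * y1 * y2) = y1 * y2 - x1 * x2 ->
  X23 * (1 - x2 * x3 * y2 * y3) = x2 * y3 + y2 * x3 ->
  Y23 * (1 + x2 * x3 * y2 * y3) = y2 * y3 - x2 * x3 ->
  L * (1 - X12 * x3 * Y12 * y3) = X12 * y3 + Y12 * x3 ->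
  R * (1 - x1 * X23 * y1 * Y23) = x1 * Y23 + y1 * X23 ->
  1 - x1 * x2 * y1 * y2 != 0 -> 1 + x1 * x2 * y1 * y2 != 0 ->
  1 - x2 * x3 * y2 * y3 != 0 -> 1 + x2 * x3 * y2 * y3 != 0 ->
  1 - X12 * x3 * Y12 * y3 != 0 -> 1 - x1 * X23 * y1 * Y23 != 0 ->
  1 + y1 ^+ 2 != 0 -> 1 + y2 ^+ 2 != 0 -> 1 + y3 ^+ 2 != 0 ->
  L = R.
Proof.
certificate
  ((1 - X12 * x3 * Y12 * y3) * (1 - x1 * X23 * y1 * Y23) * (1 - x1 * x2 * y1 * y2) * (1 + x1 * x2 * y1 * y2) * (1 - x2 * x3 * y2 * y3) * (1 + x2 * x3 * y2 * y3) * (1 + y1 ^+ 2) ^+ 2 * (1 + y2 ^+ 2) ^+ 3 * (1 + y3 ^+ 2) ^+ 2)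
  (((1 - x1 * X23 * y1 * Y23) * (1 - x1 * x2 * y1 * y2) * (1 + x1 * x2 * y1 * y2) * (1 - x2 * x3 * y2 * y3) * (1 + x2 * x3 * y2 * y3) * (1 + y1 ^+ 2) ^+ 2 * (1 + y2 ^+ 2) ^+ 3 * (1 + y3 ^+ 2) ^+ 2) * ((L * (1 - X12 * x3 * Y12 * y3)) - (X12 * y3 + Y12 * x3))
  + ((1 - x1 * x2 * y1 * y2) * (1 + x1 * x2 * y1 * y2) * (1 - x2 * x3 * y2 * y3) * (1 + x2 * x3 * y2 * y3) * (1 + y1 ^+ 2) ^+ 2 * (1 + y2 ^+ 2) ^+ 3 * (1 + y3 ^+ 2) ^+ 2 * (- 1 + x3*y3*X12*Y12)) * ((R * (1 - x1 * X23 * y1 * Y23)) - (x1 * Y23 + y1 * X23))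
  + ((1 + x1 * x2 * y1 * y2) * (1 - x2 * x3 * y2 * y3) * (1 + x2 * x3 * y2 * y3) * (1 + y1 ^+ 2) ^+ 2 * (1 + y2 ^+ 2) ^+ 3 * (1 + y3 ^+ 2) ^+ 2 * (y3 + y1*x3*y3*Y12*X23 + x1*x3*y3*Y12*Y23 - x1*y1*y3*X23*Y23)) * ((X12 * (1 - x1 * x2 * y1 * y2)) - (x1 * y2 + y1 * x2))
  + ((1 - x2 * x3 * y2 * y3) * (1 + x2 * x3 * y2 * y3) * (1 + y1 ^+ 2) ^+ 2 * (1 + y2 ^+ 2) ^+ 3 * (1 + y3 ^+ 2) ^+ 2 * (x3 + y1^+2*x2*x3*y3*X23 - x1*y1*x3*X23*Y23 + x1*y1*y2*x3*y3*X23 + x1*y1*x2*x3*y3*Y23 - x1*y1*x2*y2*x3 + x1^+2*y2*x3*y3*Y23 + x1^+2*y1^+2*x2*y2*x3*X23*Y23)) * ((Y12 * (1 + x1 * x2 * y1 * y2)) - (y1 * y2 - x1 * x2))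
  + ((1 + x2 * x3 * y2 * y3) * (1 + y1 ^+ 2) ^+ 2 * (1 + y2 ^+ 2) ^+ 3 * (1 + y3 ^+ 2) ^+ 2 * (- y1 + y1^+3*x2*y2*x3*y3 - x1*y1^+2*y2*x3*Y23 + x1*y1^+2*y2^+2*x3*y3 - x1*y1^+2*x2*y3*Y23 - x1*y1^+2*x2^+2*x3*y3 - x1^+2*y1*y2*y3*Y23 + x1^+2*y1*x2*x3*Y23 - x1^+2*y1*x2*y2*x3*y3 + x1^+2*y1^+3*x2*y2^+2*x3*Y23 - x1^+2*y1^+3*x2^+2*y2*y3*Y23 + x1^+2*y1^+3*x2^+2*y2^+2 - x1^+3*y1^+2*x2*y2^+2*y3*Y23 - x1^+3*y1^+2*x2^+2*y2*x3*Y23)) * ((X23 * (1 - x2 * x3 * y2 * y3)) - (x2 * y3 + y2 * x3))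
  + ((1 + y1 ^+ 2) ^+ 2 * (1 + y2 ^+ 2) ^+ 3 * (1 + y3 ^+ 2) ^+ 2 * (- x1 + x1*x2*y2*x3*y3 - x1*y1^+2*y2^+2*x3^+2 - x1*y1^+2*x2*y2*x3*y3 - x1*y1^+2*x2^+2*y3^+2 - x1*y1^+2*x2^+2*y2^+2*x3^+2*y3^+2 - x1^+2*y1*x2*y2*y3^+2 + x1^+2*y1*x2*y2*x3^+2 - x1^+2*y1*x2*y2^+3*x3^+2*y3^+2 + x1^+2*y1*x2^+3*y2*x3^+2*y3^+2 + x1^+2*y1^+3*x2*y2^+3*x3^+2 - x1^+2*y1^+3*x2^+3*y2*y3^+2 - x1^+3*x2*y2*x3*y3 + x1^+3*x2^+2*y2^+2*x3^+2*y3^+2 - x1^+3*y1^+2*x2*y2^+3*x3*y3 + x1^+3*y1^+2*x2^+2*y2^+2 - x1^+3*y1^+2*x2^+2*y2^+2*y3^+2 - x1^+3*y1^+2*x2^+2*y2^+2*x3^+2 - x1^+3*y1^+2*x2^+3*y2*x3*y3 - x1^+3*y1^+2*x2^+3*y2^+3*x3*y3)) * ((Y23 * (1 + x2 * x3 * y2 * y3)) - (y2 * y3 - x2 * x3))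
  + ((1 + y2 ^+ 2) ^+ 3 * (1 + y3 ^+ 2) ^+ 2 * (y1*x2*y2^+2*y3 - y1*x2*y2^+2*y3^+3 - y1*x2*y2^+4*x3^+2*y3^+3 + y1*x2^+2*y2*x3 - y1*x2^+2*y2*x3^+3 - y1*x2^+3*y2^+4*x3^+2*y3^+3 - y1*x2^+4*y2*x3^+3*y3^+2 - y1*x2^+4*y2^+3*x3^+3*y3^+2 + y1^+3*x2*y2^+2*y3 - y1^+3*x2*y2^+2*y3^+3 + y1^+3*x2*y2^+4*x3^+2*y3 - y1^+3*x2*y2^+4*x3^+2*y3^+3 + y1^+3*x2^+2*y2*x3 - y1^+3*x2^+2*y2*x3^+3 + y1^+3*x2^+2*y2^+3*x3 - y1^+3*x2^+2*y2^+3*x3^+3 + y1^+3*x2^+3*y2^+2*y3 - y1^+3*x2^+3*y2^+2*y3^+3 + y1^+3*x2^+3*y2^+4*x3^+2*y3 - y1^+3*x2^+3*y2^+4*x3^+2*y3^+3 + y1^+3*x2^+4*y2*x3*y3^+2 - y1^+3*x2^+4*y2*x3^+3*y3^+2 + y1^+3*x2^+4*y2^+3*x3*y3^+2 - y1^+3*x2^+4*y2^+3*x3^+3*y3^+2 + y1^+5*x2*y2^+4*x3^+2*y3 + y1^+5*x2^+2*y2^+3*x3 - y1^+5*x2^+2*y2^+3*x3^+3 + y1^+5*x2^+3*y2^+2*y3 - y1^+5*x2^+3*y2^+2*y3^+3 + y1^+5*x2^+3*y2^+4*x3^+2*y3 + y1^+5*x2^+4*y2*x3*y3^+2 + y1^+5*x2^+4*y2^+3*x3*y3^+2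 - x1*x2*y2^+2*x3*y3^+2 + x1*x2^+2*y2*x3^+2*y3 + x1*x2^+2*y2^+3*x3^+2*y3^+3 - x1*x2^+3*y2^+2*x3^+3*y3^+2 - x1*y1^+2*x2*y2^+2*x3*y3^+2 - x1*y1^+2*x2*y2^+4*x3*y3^+2 + x1*y1^+2*x2^+2*y2*x3^+2*y3 + x1*y1^+2*x2^+2*y2^+3*y3 - x1*y1^+2*x2^+2*y2^+3*y3^+3 + x1*y1^+2*x2^+2*y2^+3*x3^+2*y3^+3 - x1*y1^+2*x2^+3*y2^+2*x3 + x1*y1^+2*x2^+3*y2^+2*x3^+3 - x1*y1^+2*x2^+3*y2^+2*x3^+3*y3^+2 - x1*y1^+2*x2^+3*y2^+4*x3*y3^+2 + x1*y1^+2*x2^+4*y2*x3^+2*y3 + x1*y1^+2*x2^+4*y2^+3*x3^+2*y3 - x1*y1^+4*x2*y2^+4*x3*y3^+2 + x1*y1^+4*x2^+2*y2^+3*y3 - x1*y1^+4*x2^+2*y2^+3*y3^+3 - x1*y1^+4*x2^+3*y2^+2*x3 + x1*y1^+4*x2^+3*y2^+2*x3^+3 - x1*y1^+4*x2^+3*y2^+4*x3*y3^+2 + x1*y1^+4*x2^+4*y2*x3^+2*y3 + x1*y1^+4*x2^+4*y2^+3*x3^+2*y3)) * ((x1 ^+ 2 + y1 ^+ 2) - (1 - x1 ^+ 2 * y1 ^+ 2))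
  + ((1 + y3 ^+ 2) ^+ 2 * (y1*y2*x3 - y1*y2*x3*y3^+2 - y1*y2*x3^+3 - y1*y2*x3^+3*y3^+2 + 2*y1*y2^+3*x3 - 2*y1*y2^+3*x3*y3^+2 - 2*y1*y2^+3*x3^+3 - 2*y1*y2^+3*x3^+3*y3^+2 + y1*y2^+5*x3 - y1*y2^+5*x3*y3^+2 - y1*y2^+5*x3^+3 - y1*y2^+5*x3^+3*y3^+2 - y1*x2*y2^+2*x3^+2*y3^+3 - 3*y1*x2*y2^+4*x3^+2*y3^+3 - 3*y1*x2*y2^+6*x3^+2*y3^+3 - y1*x2*y2^+8*x3^+2*y3^+3 - y1*x2^+2*y2*x3^+3*y3^+2 - 3*y1*x2^+2*y2^+3*x3^+3*y3^+2 - 3*y1*x2^+2*y2^+5*x3^+3*y3^+2 - y1*x2^+2*y2^+7*x3^+3*y3^+2 + y1^+3*y2^+3*x3 - y1^+3*y2^+3*x3*y3^+2 - y1^+3*y2^+3*x3^+3 - y1^+3*y2^+3*x3^+3*y3^+2 + 2*y1^+3*y2^+5*x3 - 2*y1^+3*y2^+5*x3*y3^+2 - 2*y1^+3*y2^+5*x3^+3 - 2*y1^+3*y2^+5*x3^+3*y3^+2 + y1^+3*y2^+7*x3 - y1^+3*y2^+7*x3*y3^+2 - y1^+3*y2^+7*x3^+3 - y1^+3*y2^+7*x3^+3*y3^+2 + y1^+3*x2*y2^+2*y3 - y1^+3*x2*y2^+2*y3^+3 - y1^+3*x2*y2^+2*x3^+2*y3^+3 + 2*y1^+3*x2*y2^+4*y3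 - 2*y1^+3*x2*y2^+4*y3^+3 + y1^+3*x2*y2^+4*x3^+2*y3 - 2*y1^+3*x2*y2^+4*x3^+2*y3^+3 + y1^+3*x2*y2^+6*y3 - y1^+3*x2*y2^+6*y3^+3 + 2*y1^+3*x2*y2^+6*x3^+2*y3 - y1^+3*x2*y2^+6*x3^+2*y3^+3 + y1^+3*x2*y2^+8*x3^+2*y3 + y1^+3*x2^+2*y2*x3*y3^+2 + 3*y1^+3*x2^+2*y2^+3*x3*y3^+2 + 3*y1^+3*x2^+2*y2^+5*x3*y3^+2 + y1^+3*x2^+2*y2^+7*x3*y3^+2 - y1^+5*y2*x3 + y1^+5*y2*x3*y3^+2 + y1^+5*y2*x3^+3 + y1^+5*y2*x3^+3*y3^+2 - 2*y1^+5*y2^+3*x3 + 2*y1^+5*y2^+3*x3*y3^+2 + 2*y1^+5*y2^+3*x3^+3 + 2*y1^+5*y2^+3*x3^+3*y3^+2 - y1^+5*y2^+5*x3 + y1^+5*y2^+5*x3*y3^+2 + y1^+5*y2^+5*x3^+3 + y1^+5*y2^+5*x3^+3*y3^+2 + y1^+5*x2*y2^+2*x3^+2*y3^+3 + 3*y1^+5*x2*y2^+4*x3^+2*y3^+3 + 3*y1^+5*x2*y2^+6*x3^+2*y3^+3 + y1^+5*x2*y2^+8*x3^+2*y3^+3 + y1^+5*x2^+2*y2*x3^+3*y3^+2 + 3*y1^+5*x2^+2*y2^+3*x3^+3*y3^+2 + 3*y1^+5*x2^+2*y2^+5*x3^+3*y3^+2 + y1^+5*x2^+2*y2^+7*x3^+3*y3^+2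 - y1^+7*y2^+3*x3 + y1^+7*y2^+3*x3*y3^+2 + y1^+7*y2^+3*x3^+3 + y1^+7*y2^+3*x3^+3*y3^+2 - 2*y1^+7*y2^+5*x3 + 2*y1^+7*y2^+5*x3*y3^+2 + 2*y1^+7*y2^+5*x3^+3 + 2*y1^+7*y2^+5*x3^+3*y3^+2 - y1^+7*y2^+7*x3 + y1^+7*y2^+7*x3*y3^+2 + y1^+7*y2^+7*x3^+3 + y1^+7*y2^+7*x3^+3*y3^+2 - y1^+7*x2*y2^+2*y3 + y1^+7*x2*y2^+2*y3^+3 + y1^+7*x2*y2^+2*x3^+2*y3^+3 - 2*y1^+7*x2*y2^+4*y3 + 2*y1^+7*x2*y2^+4*y3^+3 - y1^+7*x2*y2^+4*x3^+2*y3 + 2*y1^+7*x2*y2^+4*x3^+2*y3^+3 - y1^+7*x2*y2^+6*y3 + y1^+7*x2*y2^+6*y3^+3 - 2*y1^+7*x2*y2^+6*x3^+2*y3 + y1^+7*x2*y2^+6*x3^+2*y3^+3 - y1^+7*x2*y2^+8*x3^+2*y3 - y1^+7*x2^+2*y2*x3*y3^+2 - 3*y1^+7*x2^+2*y2^+3*x3*y3^+2 - 3*y1^+7*x2^+2*y2^+5*x3*y3^+2 - y1^+7*x2^+2*y2^+7*x3*y3^+2 + x1*y1^+2*y2*y3 - x1*y1^+2*y2*y3^+3 - x1*y1^+2*y2*x3^+2*y3 - x1*y1^+2*y2*x3^+2*y3^+3 + 3*x1*y1^+2*y2^+3*y3 - 3*x1*y1^+2*y2^+3*y3^+3 - 3*x1*y1^+2*y2^+3*x3^+2*y3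 - 3*x1*y1^+2*y2^+3*x3^+2*y3^+3 + 3*x1*y1^+2*y2^+5*y3 - 3*x1*y1^+2*y2^+5*y3^+3 - 3*x1*y1^+2*y2^+5*x3^+2*y3 - 3*x1*y1^+2*y2^+5*x3^+2*y3^+3 + x1*y1^+2*y2^+7*y3 - x1*y1^+2*y2^+7*y3^+3 - x1*y1^+2*y2^+7*x3^+2*y3 - x1*y1^+2*y2^+7*x3^+2*y3^+3 - x1*y1^+2*x2*y2^+2*x3 + x1*y1^+2*x2*y2^+2*x3^+3 + 2*x1*y1^+2*x2*y2^+2*x3^+3*y3^+2 - 2*x1*y1^+2*x2*y2^+4*x3 - x1*y1^+2*x2*y2^+4*x3*y3^+2 + 2*x1*y1^+2*x2*y2^+4*x3^+3 + 5*x1*y1^+2*x2*y2^+4*x3^+3*y3^+2 - x1*y1^+2*x2*y2^+6*x3 - 2*x1*y1^+2*x2*y2^+6*x3*y3^+2 + x1*y1^+2*x2*y2^+6*x3^+3 + 4*x1*y1^+2*x2*y2^+6*x3^+3*y3^+2 - x1*y1^+2*x2*y2^+8*x3*y3^+2 + x1*y1^+2*x2*y2^+8*x3^+3*y3^+2 + x1*y1^+2*x2^+2*y2*x3^+2*y3 - x1*y1^+2*x2^+2*y2*x3^+2*y3^+3 + 3*x1*y1^+2*x2^+2*y2^+3*x3^+2*y3 - 3*x1*y1^+2*x2^+2*y2^+3*x3^+2*y3^+3 + 3*x1*y1^+2*x2^+2*y2^+5*x3^+2*y3 - 3*x1*y1^+2*x2^+2*y2^+5*x3^+2*y3^+3 +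 x1*y1^+2*x2^+2*y2^+7*x3^+2*y3 - x1*y1^+2*x2^+2*y2^+7*x3^+2*y3^+3 + 2*x1*y1^+4*y2*y3 - 2*x1*y1^+4*y2*y3^+3 - 2*x1*y1^+4*y2*x3^+2*y3 - 2*x1*y1^+4*y2*x3^+2*y3^+3 + 4*x1*y1^+4*y2^+3*y3 - 4*x1*y1^+4*y2^+3*y3^+3 - 4*x1*y1^+4*y2^+3*x3^+2*y3 - 4*x1*y1^+4*y2^+3*x3^+2*y3^+3 + 2*x1*y1^+4*y2^+5*y3 - 2*x1*y1^+4*y2^+5*y3^+3 - 2*x1*y1^+4*y2^+5*x3^+2*y3 - 2*x1*y1^+4*y2^+5*x3^+2*y3^+3 + 2*x1*y1^+4*x2*y2^+2*x3^+3*y3^+2 + 6*x1*y1^+4*x2*y2^+4*x3^+3*y3^+2 + 6*x1*y1^+4*x2*y2^+6*x3^+3*y3^+2 + 2*x1*y1^+4*x2*y2^+8*x3^+3*y3^+2 - 2*x1*y1^+4*x2^+2*y2*x3^+2*y3^+3 - 6*x1*y1^+4*x2^+2*y2^+3*x3^+2*y3^+3 - 6*x1*y1^+4*x2^+2*y2^+5*x3^+2*y3^+3 - 2*x1*y1^+4*x2^+2*y2^+7*x3^+2*y3^+3 + x1*y1^+6*y2*y3 - x1*y1^+6*y2*y3^+3 - x1*y1^+6*y2*x3^+2*y3 - x1*y1^+6*y2*x3^+2*y3^+3 + x1*y1^+6*y2^+3*y3 - x1*y1^+6*y2^+3*y3^+3 - x1*y1^+6*y2^+3*x3^+2*y3 -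 x1*y1^+6*y2^+3*x3^+2*y3^+3 - x1*y1^+6*y2^+5*y3 + x1*y1^+6*y2^+5*y3^+3 + x1*y1^+6*y2^+5*x3^+2*y3 + x1*y1^+6*y2^+5*x3^+2*y3^+3 - x1*y1^+6*y2^+7*y3 + x1*y1^+6*y2^+7*y3^+3 + x1*y1^+6*y2^+7*x3^+2*y3 + x1*y1^+6*y2^+7*x3^+2*y3^+3 + x1*y1^+6*x2*y2^+2*x3 - x1*y1^+6*x2*y2^+2*x3^+3 + 2*x1*y1^+6*x2*y2^+4*x3 + x1*y1^+6*x2*y2^+4*x3*y3^+2 - 2*x1*y1^+6*x2*y2^+4*x3^+3 + x1*y1^+6*x2*y2^+4*x3^+3*y3^+2 + x1*y1^+6*x2*y2^+6*x3 + 2*x1*y1^+6*x2*y2^+6*x3*y3^+2 - x1*y1^+6*x2*y2^+6*x3^+3 + 2*x1*y1^+6*x2*y2^+6*x3^+3*y3^+2 + x1*y1^+6*x2*y2^+8*x3*y3^+2 + x1*y1^+6*x2*y2^+8*x3^+3*y3^+2 - x1*y1^+6*x2^+2*y2*x3^+2*y3 - x1*y1^+6*x2^+2*y2*x3^+2*y3^+3 - 3*x1*y1^+6*x2^+2*y2^+3*x3^+2*y3 - 3*x1*y1^+6*x2^+2*y2^+3*x3^+2*y3^+3 - 3*x1*y1^+6*x2^+2*y2^+5*x3^+2*y3 - 3*x1*y1^+6*x2^+2*y2^+5*x3^+2*y3^+3 - x1*y1^+6*x2^+2*y2^+7*x3^+2*y3 - x1*y1^+6*x2^+2*y2^+7*x3^+2*y3^+3))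 * ((x2 ^+ 2 + y2 ^+ 2) - (1 - x2 ^+ 2 * y2 ^+ 2))
  + ((- y1*y2*x3 - 2*y1*y2*x3*y3^+2 - y1*y2*x3*y3^+4 - y1*y2^+3*x3 - 2*y1*y2^+3*x3*y3^+2 - y1*y2^+3*x3*y3^+4 + y1*y2^+5*x3 + 2*y1*y2^+5*x3*y3^+2 + y1*y2^+5*x3*y3^+4 + y1*y2^+7*x3 + 2*y1*y2^+7*x3*y3^+2 + y1*y2^+7*x3*y3^+4 - y1*x2*y2^+2*y3 - 2*y1*x2*y2^+2*y3^+3 - y1*x2*y2^+2*y3^+5 - 3*y1*x2*y2^+4*y3 - 6*y1*x2*y2^+4*y3^+3 - 3*y1*x2*y2^+4*y3^+5 - 3*y1*x2*y2^+6*y3 - 6*y1*x2*y2^+6*y3^+3 - 3*y1*x2*y2^+6*y3^+5 - y1*x2*y2^+8*y3 - 2*y1*x2*y2^+8*y3^+3 - y1*x2*y2^+8*y3^+5 - y1^+3*y2^+3*x3 - 2*y1^+3*y2^+3*x3*y3^+2 - y1^+3*y2^+3*x3*y3^+4 - y1^+3*y2^+5*x3 - 2*y1^+3*y2^+5*x3*y3^+2 - y1^+3*y2^+5*x3*y3^+4 + y1^+3*y2^+7*x3 + 2*y1^+3*y2^+7*x3*y3^+2 + y1^+3*y2^+7*x3*y3^+4 + y1^+3*y2^+9*x3 + 2*y1^+3*y2^+9*x3*y3^+2 + y1^+3*y2^+9*x3*y3^+4 - y1^+3*x2*y2^+2*y3 - 2*y1^+3*x2*y2^+2*y3^+3 -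 y1^+3*x2*y2^+2*y3^+5 - y1^+3*x2*y2^+4*y3 - 2*y1^+3*x2*y2^+4*y3^+3 - y1^+3*x2*y2^+4*y3^+5 + y1^+3*x2*y2^+6*y3 + 2*y1^+3*x2*y2^+6*y3^+3 + y1^+3*x2*y2^+6*y3^+5 + y1^+3*x2*y2^+8*y3 + 2*y1^+3*x2*y2^+8*y3^+3 + y1^+3*x2*y2^+8*y3^+5 + y1^+5*y2*x3 + 2*y1^+5*y2*x3*y3^+2 + y1^+5*y2*x3*y3^+4 + y1^+5*y2^+3*x3 + 2*y1^+5*y2^+3*x3*y3^+2 + y1^+5*y2^+3*x3*y3^+4 - y1^+5*y2^+5*x3 - 2*y1^+5*y2^+5*x3*y3^+2 - y1^+5*y2^+5*x3*y3^+4 - y1^+5*y2^+7*x3 - 2*y1^+5*y2^+7*x3*y3^+2 - y1^+5*y2^+7*x3*y3^+4 + y1^+5*x2*y2^+2*y3 + 2*y1^+5*x2*y2^+2*y3^+3 + y1^+5*x2*y2^+2*y3^+5 + 3*y1^+5*x2*y2^+4*y3 + 6*y1^+5*x2*y2^+4*y3^+3 + 3*y1^+5*x2*y2^+4*y3^+5 + 3*y1^+5*x2*y2^+6*y3 + 6*y1^+5*x2*y2^+6*y3^+3 + 3*y1^+5*x2*y2^+6*y3^+5 + y1^+5*x2*y2^+8*y3 + 2*y1^+5*x2*y2^+8*y3^+3 + y1^+5*x2*y2^+8*y3^+5 + y1^+7*y2^+3*x3 + 2*y1^+7*y2^+3*x3*y3^+2 + y1^+7*y2^+3*x3*y3^+4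 + y1^+7*y2^+5*x3 + 2*y1^+7*y2^+5*x3*y3^+2 + y1^+7*y2^+5*x3*y3^+4 - y1^+7*y2^+7*x3 - 2*y1^+7*y2^+7*x3*y3^+2 - y1^+7*y2^+7*x3*y3^+4 - y1^+7*y2^+9*x3 - 2*y1^+7*y2^+9*x3*y3^+2 - y1^+7*y2^+9*x3*y3^+4 + y1^+7*x2*y2^+2*y3 + 2*y1^+7*x2*y2^+2*y3^+3 + y1^+7*x2*y2^+2*y3^+5 + y1^+7*x2*y2^+4*y3 + 2*y1^+7*x2*y2^+4*y3^+3 + y1^+7*x2*y2^+4*y3^+5 - y1^+7*x2*y2^+6*y3 - 2*y1^+7*x2*y2^+6*y3^+3 - y1^+7*x2*y2^+6*y3^+5 - y1^+7*x2*y2^+8*y3 - 2*y1^+7*x2*y2^+8*y3^+3 - y1^+7*x2*y2^+8*y3^+5 - x1*y1^+2*y2*y3 - 2*x1*y1^+2*y2*y3^+3 - x1*y1^+2*y2*y3^+5 - 2*x1*y1^+2*y2^+3*y3 - 4*x1*y1^+2*y2^+3*y3^+3 - 2*x1*y1^+2*y2^+3*y3^+5 + 2*x1*y1^+2*y2^+7*y3 + 4*x1*y1^+2*y2^+7*y3^+3 + 2*x1*y1^+2*y2^+7*y3^+5 + x1*y1^+2*y2^+9*y3 + 2*x1*y1^+2*y2^+9*y3^+3 + x1*y1^+2*y2^+9*y3^+5 + 2*x1*y1^+2*x2*y2^+2*x3 + 4*x1*y1^+2*x2*y2^+2*x3*y3^+2 + 2*x1*y1^+2*x2*y2^+2*x3*y3^+4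 + 4*x1*y1^+2*x2*y2^+4*x3 + 8*x1*y1^+2*x2*y2^+4*x3*y3^+2 + 4*x1*y1^+2*x2*y2^+4*x3*y3^+4 + 2*x1*y1^+2*x2*y2^+6*x3 + 4*x1*y1^+2*x2*y2^+6*x3*y3^+2 + 2*x1*y1^+2*x2*y2^+6*x3*y3^+4 - 2*x1*y1^+4*y2*y3 - 4*x1*y1^+4*y2*y3^+3 - 2*x1*y1^+4*y2*y3^+5 - 2*x1*y1^+4*y2^+3*y3 - 4*x1*y1^+4*y2^+3*y3^+3 - 2*x1*y1^+4*y2^+3*y3^+5 + 2*x1*y1^+4*y2^+5*y3 + 4*x1*y1^+4*y2^+5*y3^+3 + 2*x1*y1^+4*y2^+5*y3^+5 + 2*x1*y1^+4*y2^+7*y3 + 4*x1*y1^+4*y2^+7*y3^+3 + 2*x1*y1^+4*y2^+7*y3^+5 + 2*x1*y1^+4*x2*y2^+2*x3 + 4*x1*y1^+4*x2*y2^+2*x3*y3^+2 + 2*x1*y1^+4*x2*y2^+2*x3*y3^+4 + 6*x1*y1^+4*x2*y2^+4*x3 + 12*x1*y1^+4*x2*y2^+4*x3*y3^+2 + 6*x1*y1^+4*x2*y2^+4*x3*y3^+4 + 6*x1*y1^+4*x2*y2^+6*x3 + 12*x1*y1^+4*x2*y2^+6*x3*y3^+2 + 6*x1*y1^+4*x2*y2^+6*x3*y3^+4 + 2*x1*y1^+4*x2*y2^+8*x3 + 4*x1*y1^+4*x2*y2^+8*x3*y3^+2 + 2*x1*y1^+4*x2*y2^+8*x3*y3^+4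 - x1*y1^+6*y2*y3 - 2*x1*y1^+6*y2*y3^+3 - x1*y1^+6*y2*y3^+5 + 2*x1*y1^+6*y2^+5*y3 + 4*x1*y1^+6*y2^+5*y3^+3 + 2*x1*y1^+6*y2^+5*y3^+5 - x1*y1^+6*y2^+9*y3 - 2*x1*y1^+6*y2^+9*y3^+3 - x1*y1^+6*y2^+9*y3^+5 + 2*x1*y1^+6*x2*y2^+4*x3 + 4*x1*y1^+6*x2*y2^+4*x3*y3^+2 + 2*x1*y1^+6*x2*y2^+4*x3*y3^+4 + 4*x1*y1^+6*x2*y2^+6*x3 + 8*x1*y1^+6*x2*y2^+6*x3*y3^+2 + 4*x1*y1^+6*x2*y2^+6*x3*y3^+4 + 2*x1*y1^+6*x2*y2^+8*x3 + 4*x1*y1^+6*x2*y2^+8*x3*y3^+2 + 2*x1*y1^+6*x2*y2^+8*x3*y3^+4)) * ((x3 ^+ 2 + y3 ^+ 2) - (1 - x3 ^+ 2 * y3 ^+ 2))).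
Qed.

Lemma edwards_assoc_y (x1 y1 x2 y2 x3 y3 X12 Y12 X23 Y23 L R : F) :
  x1 ^+ 2 + y1 ^+ 2 = 1 - x1 ^+ 2 * y1 ^+ 2 ->
  x2 ^+ 2 + y2 ^+ 2 = 1 - x2 ^+ 2 * y2 ^+ 2 ->
  x3 ^+ 2 + y3 ^+ 2 = 1 - x3 ^+ 2 * y3 ^+ 2 ->
  X12 * (1 - x1 * x2 * y1 * y2) = x1 * y2 + y1 * x2 ->
  Y12 * (1 + x1 * x2 * y1 * y2) = y1 * y2 - x1 * x2 ->
  X23 * (1 - x2 * x3 * y2 * y3) = x2 * y3 + y2 * x3 ->
  Y23 * (1 + x2 * x3 * y2 * y3) = y2 * y3 - x2 * x3 ->
  L * (1 + X12 * x3 * Y12 * y3) = Y12 * y3 - X12 * x3 ->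
  R * (1 + x1 * X23 * y1 * Y23) = y1 * Y23 - x1 * X23 ->
  1 - x1 * x2 * y1 * y2 != 0 -> 1 + x1 * x2 * y1 * y2 != 0 ->
  1 - x2 * x3 * y2 * y3 != 0 -> 1 + x2 * x3 * y2 * y3 != 0 ->
  1 + X12 * x3 * Y12 * y3 != 0 -> 1 + x1 * X23 * y1 * Y23 != 0 ->
  1 + y1 ^+ 2 != 0 -> 1 + y2 ^+ 2 != 0 -> 1 + y3 ^+ 2 != 0 ->
  L = R.
Proof.
certificate
  ((1 + X12 * x3 * Y12 * y3) * (1 + x1 * X23 * y1 * Y23) * (1 - x1 * x2 * y1 * y2) * (1 + x1 * x2 * y1 * y2) * (1 - x2 * x3 * y2 * y3) * (1 + x2 * x3 * y2 * y3) * (1 + y1 ^+ 2) ^+ 2 * (1 + y2 ^+ 2) ^+ 3 * (1 + y3 ^+ 2) ^+ 2)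
  (((1 + x1 * X23 * y1 * Y23) * (1 - x1 * x2 * y1 * y2) * (1 + x1 * x2 * y1 * y2) * (1 - x2 * x3 * y2 * y3) * (1 + x2 * x3 * y2 * y3) * (1 + y1 ^+ 2) ^+ 2 * (1 + y2 ^+ 2) ^+ 3 * (1 + y3 ^+ 2) ^+ 2) * ((L * (1 + X12 * x3 * Y12 * y3)) - (Y12 * y3 - X12 * x3))
  + ((1 - x1 * x2 * y1 * y2) * (1 + x1 * x2 * y1 * y2) * (1 - x2 * x3 * y2 * y3) * (1 + x2 * x3 * y2 * y3) * (1 + y1 ^+ 2) ^+ 2 * (1 + y2 ^+ 2) ^+ 3 * (1 + y3 ^+ 2) ^+ 2 * (- 1 - x3*y3*X12*Y12)) * ((R * (1 + x1 * X23 * y1 * Y23)) - (y1 * Y23 - x1 * X23))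
  + ((1 + x1 * x2 * y1 * y2) * (1 - x2 * x3 * y2 * y3) * (1 + x2 * x3 * y2 * y3) * (1 + y1 ^+ 2) ^+ 2 * (1 + y2 ^+ 2) ^+ 3 * (1 + y3 ^+ 2) ^+ 2 * (- x3 - y1*x3*y3*Y12*Y23 + x1*x3*y3*Y12*X23 - x1*y1*x3*X23*Y23)) * ((X12 * (1 - x1 * x2 * y1 * y2)) - (x1 * y2 + y1 * x2))
  + ((1 - x2 * x3 * y2 * y3) * (1 + x2 * x3 * y2 * y3) * (1 + y1 ^+ 2) ^+ 2 * (1 + y2 ^+ 2) ^+ 3 * (1 + y3 ^+ 2) ^+ 2 * (y3 - y1^+2*x2*x3*y3*Y23 + x1*y1*y3*X23*Y23 - x1*y1*y2*x3*y3*Y23 + x1*y1*x2*x3*y3*X23 - x1*y1*x2*y2*y3 + x1^+2*y2*x3*y3*X23 - x1^+2*y1^+2*x2*y2*y3*X23*Y23)) * ((Y12 * (1 + x1 * x2 * y1 * y2)) - (y1 * y2 - x1 * x2))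
  + ((1 + x2 * x3 * y2 * y3) * (1 + y1 ^+ 2) ^+ 2 * (1 + y2 ^+ 2) ^+ 3 * (1 + y3 ^+ 2) ^+ 2 * (x1 + x1*y1^+2*y2*y3*Y23 - x1*y1^+2*x2*x3*Y23 + x1*y1^+2*x2*y2*x3*y3 - x1^+2*y1*y2*x3*Y23 + x1^+2*y1*y2^+2*x3*y3 - x1^+2*y1*x2*y3*Y23 - x1^+2*y1*x2^+2*x3*y3 - x1^+2*y1^+3*x2*y2^+2*y3*Y23 - x1^+2*y1^+3*x2^+2*y2*x3*Y23 - x1^+3*x2*y2*x3*y3 - x1^+3*y1^+2*x2*y2^+2*x3*Y23 + x1^+3*y1^+2*x2^+2*y2*y3*Y23 - x1^+3*y1^+2*x2^+2*y2^+2)) * ((X23 * (1 - x2 * x3 * y2 * y3)) - (x2 * y3 + y2 * x3))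
  + ((1 + y1 ^+ 2) ^+ 2 * (1 + y2 ^+ 2) ^+ 3 * (1 + y3 ^+ 2) ^+ 2 * (- y1 + y1*x2*y2*x3*y3 - y1^+3*x2*y2*x3*y3 + y1^+3*x2^+2*y2^+2*x3^+2*y3^+2 + x1*y1^+2*x2*y2*y3^+2 - x1*y1^+2*x2*y2*x3^+2 + x1*y1^+2*x2*y2^+3*x3^+2*y3^+2 - x1*y1^+2*x2^+3*y2*x3^+2*y3^+2 - x1^+2*y1*y2^+2*x3^+2 - x1^+2*y1*x2*y2*x3*y3 - x1^+2*y1*x2^+2*y3^+2 - x1^+2*y1*x2^+2*y2^+2*x3^+2*y3^+2 - x1^+2*y1^+3*x2*y2^+3*x3*y3 + x1^+2*y1^+3*x2^+2*y2^+2 - x1^+2*y1^+3*x2^+2*y2^+2*y3^+2 - x1^+2*y1^+3*x2^+2*y2^+2*x3^+2 - x1^+2*y1^+3*x2^+3*y2*x3*y3 - x1^+2*y1^+3*x2^+3*y2^+3*x3*y3 - x1^+3*y1^+2*x2*y2^+3*x3^+2 + x1^+3*y1^+2*x2^+3*y2*y3^+2)) * ((Y23 * (1 + x2 * x3 * y2 * y3)) - (y2 * y3 - x2 * x3))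
  + ((1 + y2 ^+ 2) ^+ 3 * (1 + y3 ^+ 2) ^+ 2 * (- y1*x2*y2^+2*x3 + y1*x2*y2^+2*x3^+3 + y1*x2*y2^+4*x3^+3*y3^+2 + y1*x2^+2*y2*y3 - y1*x2^+2*y2*y3^+3 + y1*x2^+3*y2^+4*x3^+3*y3^+2 - y1*x2^+4*y2*x3^+2*y3^+3 - y1*x2^+4*y2^+3*x3^+2*y3^+3 - y1^+3*x2*y2^+2*x3 + y1^+3*x2*y2^+2*x3^+3 - y1^+3*x2*y2^+4*x3*y3^+2 + y1^+3*x2*y2^+4*x3^+3*y3^+2 + y1^+3*x2^+2*y2*y3 - y1^+3*x2^+2*y2*y3^+3 + y1^+3*x2^+2*y2^+3*y3 - y1^+3*x2^+2*y2^+3*y3^+3 - y1^+3*x2^+3*y2^+2*x3 + y1^+3*x2^+3*y2^+2*x3^+3 - y1^+3*x2^+3*y2^+4*x3*y3^+2 + y1^+3*x2^+3*y2^+4*x3^+3*y3^+2 + y1^+3*x2^+4*y2*x3^+2*y3 - y1^+3*x2^+4*y2*x3^+2*y3^+3 + y1^+3*x2^+4*y2^+3*x3^+2*y3 - y1^+3*x2^+4*y2^+3*x3^+2*y3^+3 - y1^+5*x2*y2^+4*x3*y3^+2 + y1^+5*x2^+2*y2^+3*y3 - y1^+5*x2^+2*y2^+3*y3^+3 - y1^+5*x2^+3*y2^+2*x3 + y1^+5*x2^+3*y2^+2*x3^+3 - y1^+5*x2^+3*y2^+4*x3*y3^+2 + y1^+5*x2^+4*y2*x3^+2*y3 + y1^+5*x2^+4*y2^+3*x3^+2*y3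 - x1*x2*y2^+2*x3^+2*y3 - x1*x2^+2*y2*x3*y3^+2 - x1*x2^+2*y2^+3*x3^+3*y3^+2 - x1*x2^+3*y2^+2*x3^+2*y3^+3 - x1*y1^+2*x2*y2^+2*x3^+2*y3 - x1*y1^+2*x2*y2^+4*x3^+2*y3 - x1*y1^+2*x2^+2*y2*x3*y3^+2 - x1*y1^+2*x2^+2*y2^+3*x3 + x1*y1^+2*x2^+2*y2^+3*x3^+3 - x1*y1^+2*x2^+2*y2^+3*x3^+3*y3^+2 - x1*y1^+2*x2^+3*y2^+2*y3 + x1*y1^+2*x2^+3*y2^+2*y3^+3 - x1*y1^+2*x2^+3*y2^+2*x3^+2*y3^+3 - x1*y1^+2*x2^+3*y2^+4*x3^+2*y3 - x1*y1^+2*x2^+4*y2*x3*y3^+2 - x1*y1^+2*x2^+4*y2^+3*x3*y3^+2 - x1*y1^+4*x2*y2^+4*x3^+2*y3 - x1*y1^+4*x2^+2*y2^+3*x3 + x1*y1^+4*x2^+2*y2^+3*x3^+3 - x1*y1^+4*x2^+3*y2^+2*y3 + x1*y1^+4*x2^+3*y2^+2*y3^+3 - x1*y1^+4*x2^+3*y2^+4*x3^+2*y3 - x1*y1^+4*x2^+4*y2*x3*y3^+2 - x1*y1^+4*x2^+4*y2^+3*x3*y3^+2)) * ((x1 ^+ 2 + y1 ^+ 2) - (1 - x1 ^+ 2 * y1 ^+ 2))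
  + ((1 + y3 ^+ 2) ^+ 2 * (y1*y2*y3 - y1*y2*y3^+3 - y1*y2*x3^+2*y3 - y1*y2*x3^+2*y3^+3 + 2*y1*y2^+3*y3 - 2*y1*y2^+3*y3^+3 - 2*y1*y2^+3*x3^+2*y3 - 2*y1*y2^+3*x3^+2*y3^+3 + y1*y2^+5*y3 - y1*y2^+5*y3^+3 - y1*y2^+5*x3^+2*y3 - y1*y2^+5*x3^+2*y3^+3 + y1*x2*y2^+2*x3^+3*y3^+2 + 3*y1*x2*y2^+4*x3^+3*y3^+2 + 3*y1*x2*y2^+6*x3^+3*y3^+2 + y1*x2*y2^+8*x3^+3*y3^+2 - y1*x2^+2*y2*x3^+2*y3^+3 - 3*y1*x2^+2*y2^+3*x3^+2*y3^+3 - 3*y1*x2^+2*y2^+5*x3^+2*y3^+3 - y1*x2^+2*y2^+7*x3^+2*y3^+3 + y1^+3*y2^+3*y3 - y1^+3*y2^+3*y3^+3 - y1^+3*y2^+3*x3^+2*y3 - y1^+3*y2^+3*x3^+2*y3^+3 + 2*y1^+3*y2^+5*y3 - 2*y1^+3*y2^+5*y3^+3 - 2*y1^+3*y2^+5*x3^+2*y3 - 2*y1^+3*y2^+5*x3^+2*y3^+3 + y1^+3*y2^+7*y3 - y1^+3*y2^+7*y3^+3 - y1^+3*y2^+7*x3^+2*y3 - y1^+3*y2^+7*x3^+2*y3^+3 - y1^+3*x2*y2^+2*x3 + y1^+3*x2*y2^+2*x3^+3 + y1^+3*x2*y2^+2*x3^+3*y3^+2 - 2*y1^+3*x2*y2^+4*x3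 - y1^+3*x2*y2^+4*x3*y3^+2 + 2*y1^+3*x2*y2^+4*x3^+3 + 2*y1^+3*x2*y2^+4*x3^+3*y3^+2 - y1^+3*x2*y2^+6*x3 - 2*y1^+3*x2*y2^+6*x3*y3^+2 + y1^+3*x2*y2^+6*x3^+3 + y1^+3*x2*y2^+6*x3^+3*y3^+2 - y1^+3*x2*y2^+8*x3*y3^+2 + y1^+3*x2^+2*y2*x3^+2*y3 + 3*y1^+3*x2^+2*y2^+3*x3^+2*y3 + 3*y1^+3*x2^+2*y2^+5*x3^+2*y3 + y1^+3*x2^+2*y2^+7*x3^+2*y3 - y1^+5*y2*y3 + y1^+5*y2*y3^+3 + y1^+5*y2*x3^+2*y3 + y1^+5*y2*x3^+2*y3^+3 - 2*y1^+5*y2^+3*y3 + 2*y1^+5*y2^+3*y3^+3 + 2*y1^+5*y2^+3*x3^+2*y3 + 2*y1^+5*y2^+3*x3^+2*y3^+3 - y1^+5*y2^+5*y3 + y1^+5*y2^+5*y3^+3 + y1^+5*y2^+5*x3^+2*y3 + y1^+5*y2^+5*x3^+2*y3^+3 - y1^+5*x2*y2^+2*x3^+3*y3^+2 - 3*y1^+5*x2*y2^+4*x3^+3*y3^+2 - 3*y1^+5*x2*y2^+6*x3^+3*y3^+2 - y1^+5*x2*y2^+8*x3^+3*y3^+2 + y1^+5*x2^+2*y2*x3^+2*y3^+3 + 3*y1^+5*x2^+2*y2^+3*x3^+2*y3^+3 + 3*y1^+5*x2^+2*y2^+5*x3^+2*y3^+3 + y1^+5*x2^+2*y2^+7*x3^+2*y3^+3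 - y1^+7*y2^+3*y3 + y1^+7*y2^+3*y3^+3 + y1^+7*y2^+3*x3^+2*y3 + y1^+7*y2^+3*x3^+2*y3^+3 - 2*y1^+7*y2^+5*y3 + 2*y1^+7*y2^+5*y3^+3 + 2*y1^+7*y2^+5*x3^+2*y3 + 2*y1^+7*y2^+5*x3^+2*y3^+3 - y1^+7*y2^+7*y3 + y1^+7*y2^+7*y3^+3 + y1^+7*y2^+7*x3^+2*y3 + y1^+7*y2^+7*x3^+2*y3^+3 + y1^+7*x2*y2^+2*x3 - y1^+7*x2*y2^+2*x3^+3 - y1^+7*x2*y2^+2*x3^+3*y3^+2 + 2*y1^+7*x2*y2^+4*x3 + y1^+7*x2*y2^+4*x3*y3^+2 - 2*y1^+7*x2*y2^+4*x3^+3 - 2*y1^+7*x2*y2^+4*x3^+3*y3^+2 + y1^+7*x2*y2^+6*x3 + 2*y1^+7*x2*y2^+6*x3*y3^+2 - y1^+7*x2*y2^+6*x3^+3 - y1^+7*x2*y2^+6*x3^+3*y3^+2 + y1^+7*x2*y2^+8*x3*y3^+2 - y1^+7*x2^+2*y2*x3^+2*y3 - 3*y1^+7*x2^+2*y2^+3*x3^+2*y3 - 3*y1^+7*x2^+2*y2^+5*x3^+2*y3 - y1^+7*x2^+2*y2^+7*x3^+2*y3 - x1*y1^+2*y2*x3 + x1*y1^+2*y2*x3*y3^+2 + x1*y1^+2*y2*x3^+3 + x1*y1^+2*y2*x3^+3*y3^+2 - 3*x1*y1^+2*y2^+3*x3 + 3*x1*y1^+2*y2^+3*x3*y3^+2 +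 3*x1*y1^+2*y2^+3*x3^+3 + 3*x1*y1^+2*y2^+3*x3^+3*y3^+2 - 3*x1*y1^+2*y2^+5*x3 + 3*x1*y1^+2*y2^+5*x3*y3^+2 + 3*x1*y1^+2*y2^+5*x3^+3 + 3*x1*y1^+2*y2^+5*x3^+3*y3^+2 - x1*y1^+2*y2^+7*x3 + x1*y1^+2*y2^+7*x3*y3^+2 + x1*y1^+2*y2^+7*x3^+3 + x1*y1^+2*y2^+7*x3^+3*y3^+2 - x1*y1^+2*x2*y2^+2*y3 + x1*y1^+2*x2*y2^+2*y3^+3 + 2*x1*y1^+2*x2*y2^+2*x3^+2*y3^+3 - 2*x1*y1^+2*x2*y2^+4*y3 + 2*x1*y1^+2*x2*y2^+4*y3^+3 - x1*y1^+2*x2*y2^+4*x3^+2*y3 + 5*x1*y1^+2*x2*y2^+4*x3^+2*y3^+3 - x1*y1^+2*x2*y2^+6*y3 + x1*y1^+2*x2*y2^+6*y3^+3 - 2*x1*y1^+2*x2*y2^+6*x3^+2*y3 + 4*x1*y1^+2*x2*y2^+6*x3^+2*y3^+3 - x1*y1^+2*x2*y2^+8*x3^+2*y3 + x1*y1^+2*x2*y2^+8*x3^+2*y3^+3 - x1*y1^+2*x2^+2*y2*x3*y3^+2 + x1*y1^+2*x2^+2*y2*x3^+3*y3^+2 - 3*x1*y1^+2*x2^+2*y2^+3*x3*y3^+2 + 3*x1*y1^+2*x2^+2*y2^+3*x3^+3*y3^+2 - 3*x1*y1^+2*x2^+2*y2^+5*x3*y3^+2 + 3*x1*y1^+2*x2^+2*y2^+5*x3^+3*y3^+2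 - x1*y1^+2*x2^+2*y2^+7*x3*y3^+2 + x1*y1^+2*x2^+2*y2^+7*x3^+3*y3^+2 - 2*x1*y1^+4*y2*x3 + 2*x1*y1^+4*y2*x3*y3^+2 + 2*x1*y1^+4*y2*x3^+3 + 2*x1*y1^+4*y2*x3^+3*y3^+2 - 4*x1*y1^+4*y2^+3*x3 + 4*x1*y1^+4*y2^+3*x3*y3^+2 + 4*x1*y1^+4*y2^+3*x3^+3 + 4*x1*y1^+4*y2^+3*x3^+3*y3^+2 - 2*x1*y1^+4*y2^+5*x3 + 2*x1*y1^+4*y2^+5*x3*y3^+2 + 2*x1*y1^+4*y2^+5*x3^+3 + 2*x1*y1^+4*y2^+5*x3^+3*y3^+2 + 2*x1*y1^+4*x2*y2^+2*x3^+2*y3^+3 + 6*x1*y1^+4*x2*y2^+4*x3^+2*y3^+3 + 6*x1*y1^+4*x2*y2^+6*x3^+2*y3^+3 + 2*x1*y1^+4*x2*y2^+8*x3^+2*y3^+3 + 2*x1*y1^+4*x2^+2*y2*x3^+3*y3^+2 + 6*x1*y1^+4*x2^+2*y2^+3*x3^+3*y3^+2 + 6*x1*y1^+4*x2^+2*y2^+5*x3^+3*y3^+2 + 2*x1*y1^+4*x2^+2*y2^+7*x3^+3*y3^+2 - x1*y1^+6*y2*x3 + x1*y1^+6*y2*x3*y3^+2 + x1*y1^+6*y2*x3^+3 + x1*y1^+6*y2*x3^+3*y3^+2 - x1*y1^+6*y2^+3*x3 + x1*y1^+6*y2^+3*x3*y3^+2 + x1*y1^+6*y2^+3*x3^+3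 + x1*y1^+6*y2^+3*x3^+3*y3^+2 + x1*y1^+6*y2^+5*x3 - x1*y1^+6*y2^+5*x3*y3^+2 - x1*y1^+6*y2^+5*x3^+3 - x1*y1^+6*y2^+5*x3^+3*y3^+2 + x1*y1^+6*y2^+7*x3 - x1*y1^+6*y2^+7*x3*y3^+2 - x1*y1^+6*y2^+7*x3^+3 - x1*y1^+6*y2^+7*x3^+3*y3^+2 + x1*y1^+6*x2*y2^+2*y3 - x1*y1^+6*x2*y2^+2*y3^+3 + 2*x1*y1^+6*x2*y2^+4*y3 - 2*x1*y1^+6*x2*y2^+4*y3^+3 + x1*y1^+6*x2*y2^+4*x3^+2*y3 + x1*y1^+6*x2*y2^+4*x3^+2*y3^+3 + x1*y1^+6*x2*y2^+6*y3 - x1*y1^+6*x2*y2^+6*y3^+3 + 2*x1*y1^+6*x2*y2^+6*x3^+2*y3 + 2*x1*y1^+6*x2*y2^+6*x3^+2*y3^+3 + x1*y1^+6*x2*y2^+8*x3^+2*y3 + x1*y1^+6*x2*y2^+8*x3^+2*y3^+3 + x1*y1^+6*x2^+2*y2*x3*y3^+2 + x1*y1^+6*x2^+2*y2*x3^+3*y3^+2 + 3*x1*y1^+6*x2^+2*y2^+3*x3*y3^+2 + 3*x1*y1^+6*x2^+2*y2^+3*x3^+3*y3^+2 + 3*x1*y1^+6*x2^+2*y2^+5*x3*y3^+2 + 3*x1*y1^+6*x2^+2*y2^+5*x3^+3*y3^+2 + x1*y1^+6*x2^+2*y2^+7*x3*y3^+2 + x1*y1^+6*x2^+2*y2^+7*x3^+3*y3^+2))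 * ((x2 ^+ 2 + y2 ^+ 2) - (1 - x2 ^+ 2 * y2 ^+ 2))
  + ((- y1*y2*y3 - 2*y1*y2*y3^+3 - y1*y2*y3^+5 - y1*y2^+3*y3 - 2*y1*y2^+3*y3^+3 - y1*y2^+3*y3^+5 + y1*y2^+5*y3 + 2*y1*y2^+5*y3^+3 + y1*y2^+5*y3^+5 + y1*y2^+7*y3 + 2*y1*y2^+7*y3^+3 + y1*y2^+7*y3^+5 + y1*x2*y2^+2*x3 + 2*y1*x2*y2^+2*x3*y3^+2 + y1*x2*y2^+2*x3*y3^+4 + 3*y1*x2*y2^+4*x3 + 6*y1*x2*y2^+4*x3*y3^+2 + 3*y1*x2*y2^+4*x3*y3^+4 + 3*y1*x2*y2^+6*x3 + 6*y1*x2*y2^+6*x3*y3^+2 + 3*y1*x2*y2^+6*x3*y3^+4 + y1*x2*y2^+8*x3 + 2*y1*x2*y2^+8*x3*y3^+2 + y1*x2*y2^+8*x3*y3^+4 - y1^+3*y2^+3*y3 - 2*y1^+3*y2^+3*y3^+3 - y1^+3*y2^+3*y3^+5 - y1^+3*y2^+5*y3 - 2*y1^+3*y2^+5*y3^+3 - y1^+3*y2^+5*y3^+5 + y1^+3*y2^+7*y3 + 2*y1^+3*y2^+7*y3^+3 + y1^+3*y2^+7*y3^+5 + y1^+3*y2^+9*y3 + 2*y1^+3*y2^+9*y3^+3 + y1^+3*y2^+9*y3^+5 + y1^+3*x2*y2^+2*x3 + 2*y1^+3*x2*y2^+2*x3*y3^+2 + y1^+3*x2*y2^+2*x3*y3^+4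 + y1^+3*x2*y2^+4*x3 + 2*y1^+3*x2*y2^+4*x3*y3^+2 + y1^+3*x2*y2^+4*x3*y3^+4 - y1^+3*x2*y2^+6*x3 - 2*y1^+3*x2*y2^+6*x3*y3^+2 - y1^+3*x2*y2^+6*x3*y3^+4 - y1^+3*x2*y2^+8*x3 - 2*y1^+3*x2*y2^+8*x3*y3^+2 - y1^+3*x2*y2^+8*x3*y3^+4 + y1^+5*y2*y3 + 2*y1^+5*y2*y3^+3 + y1^+5*y2*y3^+5 + y1^+5*y2^+3*y3 + 2*y1^+5*y2^+3*y3^+3 + y1^+5*y2^+3*y3^+5 - y1^+5*y2^+5*y3 - 2*y1^+5*y2^+5*y3^+3 - y1^+5*y2^+5*y3^+5 - y1^+5*y2^+7*y3 - 2*y1^+5*y2^+7*y3^+3 - y1^+5*y2^+7*y3^+5 - y1^+5*x2*y2^+2*x3 - 2*y1^+5*x2*y2^+2*x3*y3^+2 - y1^+5*x2*y2^+2*x3*y3^+4 - 3*y1^+5*x2*y2^+4*x3 - 6*y1^+5*x2*y2^+4*x3*y3^+2 - 3*y1^+5*x2*y2^+4*x3*y3^+4 - 3*y1^+5*x2*y2^+6*x3 - 6*y1^+5*x2*y2^+6*x3*y3^+2 - 3*y1^+5*x2*y2^+6*x3*y3^+4 - y1^+5*x2*y2^+8*x3 - 2*y1^+5*x2*y2^+8*x3*y3^+2 - y1^+5*x2*y2^+8*x3*y3^+4 + y1^+7*y2^+3*y3 + 2*y1^+7*y2^+3*y3^+3 + y1^+7*y2^+3*y3^+5 + y1^+7*y2^+5*y3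 + 2*y1^+7*y2^+5*y3^+3 + y1^+7*y2^+5*y3^+5 - y1^+7*y2^+7*y3 - 2*y1^+7*y2^+7*y3^+3 - y1^+7*y2^+7*y3^+5 - y1^+7*y2^+9*y3 - 2*y1^+7*y2^+9*y3^+3 - y1^+7*y2^+9*y3^+5 - y1^+7*x2*y2^+2*x3 - 2*y1^+7*x2*y2^+2*x3*y3^+2 - y1^+7*x2*y2^+2*x3*y3^+4 - y1^+7*x2*y2^+4*x3 - 2*y1^+7*x2*y2^+4*x3*y3^+2 - y1^+7*x2*y2^+4*x3*y3^+4 + y1^+7*x2*y2^+6*x3 + 2*y1^+7*x2*y2^+6*x3*y3^+2 + y1^+7*x2*y2^+6*x3*y3^+4 + y1^+7*x2*y2^+8*x3 + 2*y1^+7*x2*y2^+8*x3*y3^+2 + y1^+7*x2*y2^+8*x3*y3^+4 + x1*y1^+2*y2*x3 + 2*x1*y1^+2*y2*x3*y3^+2 + x1*y1^+2*y2*x3*y3^+4 + 2*x1*y1^+2*y2^+3*x3 + 4*x1*y1^+2*y2^+3*x3*y3^+2 + 2*x1*y1^+2*y2^+3*x3*y3^+4 - 2*x1*y1^+2*y2^+7*x3 - 4*x1*y1^+2*y2^+7*x3*y3^+2 - 2*x1*y1^+2*y2^+7*x3*y3^+4 - x1*y1^+2*y2^+9*x3 - 2*x1*y1^+2*y2^+9*x3*y3^+2 - x1*y1^+2*y2^+9*x3*y3^+4 + 2*x1*y1^+2*x2*y2^+2*y3 + 4*x1*y1^+2*x2*y2^+2*y3^+3 + 2*x1*y1^+2*x2*y2^+2*y3^+5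 + 4*x1*y1^+2*x2*y2^+4*y3 + 8*x1*y1^+2*x2*y2^+4*y3^+3 + 4*x1*y1^+2*x2*y2^+4*y3^+5 + 2*x1*y1^+2*x2*y2^+6*y3 + 4*x1*y1^+2*x2*y2^+6*y3^+3 + 2*x1*y1^+2*x2*y2^+6*y3^+5 + 2*x1*y1^+4*y2*x3 + 4*x1*y1^+4*y2*x3*y3^+2 + 2*x1*y1^+4*y2*x3*y3^+4 + 2*x1*y1^+4*y2^+3*x3 + 4*x1*y1^+4*y2^+3*x3*y3^+2 + 2*x1*y1^+4*y2^+3*x3*y3^+4 - 2*x1*y1^+4*y2^+5*x3 - 4*x1*y1^+4*y2^+5*x3*y3^+2 - 2*x1*y1^+4*y2^+5*x3*y3^+4 - 2*x1*y1^+4*y2^+7*x3 - 4*x1*y1^+4*y2^+7*x3*y3^+2 - 2*x1*y1^+4*y2^+7*x3*y3^+4 + 2*x1*y1^+4*x2*y2^+2*y3 + 4*x1*y1^+4*x2*y2^+2*y3^+3 + 2*x1*y1^+4*x2*y2^+2*y3^+5 + 6*x1*y1^+4*x2*y2^+4*y3 + 12*x1*y1^+4*x2*y2^+4*y3^+3 + 6*x1*y1^+4*x2*y2^+4*y3^+5 + 6*x1*y1^+4*x2*y2^+6*y3 + 12*x1*y1^+4*x2*y2^+6*y3^+3 + 6*x1*y1^+4*x2*y2^+6*y3^+5 + 2*x1*y1^+4*x2*y2^+8*y3 + 4*x1*y1^+4*x2*y2^+8*y3^+3 + 2*x1*y1^+4*x2*y2^+8*y3^+5 + x1*y1^+6*y2*x3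 + 2*x1*y1^+6*y2*x3*y3^+2 + x1*y1^+6*y2*x3*y3^+4 - 2*x1*y1^+6*y2^+5*x3 - 4*x1*y1^+6*y2^+5*x3*y3^+2 - 2*x1*y1^+6*y2^+5*x3*y3^+4 + x1*y1^+6*y2^+9*x3 + 2*x1*y1^+6*y2^+9*x3*y3^+2 + x1*y1^+6*y2^+9*x3*y3^+4 + 2*x1*y1^+6*x2*y2^+4*y3 + 4*x1*y1^+6*x2*y2^+4*y3^+3 + 2*x1*y1^+6*x2*y2^+4*y3^+5 + 4*x1*y1^+6*x2*y2^+6*y3 + 8*x1*y1^+6*x2*y2^+6*y3^+3 + 4*x1*y1^+6*x2*y2^+6*y3^+5 + 2*x1*y1^+6*x2*y2^+8*y3 + 4*x1*y1^+6*x2*y2^+8*y3^+3 + 2*x1*y1^+6*x2*y2^+8*y3^+5)) * ((x3 ^+ 2 + y3 ^+ 2) - (1 - x3 ^+ 2 * y3 ^+ 2))).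
Qed.

Lemma chord_on_curve (a x1 y1 x2 y2 l x3 y3 : F) :
  y1 ^+ 2 = x1 ^+ 3 + a * x1 -> y2 ^+ 2 = x2 ^+ 3 + a * x2 ->
  l * (x2 - x1) = y2 - y1 -> x3 = l ^+ 2 - x1 - x2 -> y3 = l * (x1 - x3) - y1 ->
  x2 - x1 != 0 ->
  y3 ^+ 2 = x3 ^+ 3 + a * x3.
Proof.
certificate
  ((x2 - x1) ^+ 4)
  (((x2 - x1) ^+ 4 * (y3 - l*x3 - y1 + x1*l)) * (y3 - ((l * (x1 - x3)) - y1))
  + ((x2 - x1) ^+ 4 * (- x3^+2 - a + x2*x3 + x2*l^+2 - x2^+2 + 2*y1*l + x1*x3 - x1*l^+2 - 2*x1*x2 - x1^+2)) * (x3 - ((l ^+ 2 - x1) - x2))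
  + ((x2*y2^+3 - x2^+2*y2*a + x2^+2*y2^+2*l - x2^+3*a*l + x2^+3*y2*l^+2 + x2^+4*l^+3 - 2*x2^+4*y2 - 2*x2^+5*l - y1*x2*y2^+2 + y1*x2^+2*a + y1*x2^+3*l^+2 - y1^+2*x2*y2 - y1^+2*x2^+2*l + y1^+3*x2 - x1*y2^+3 + 2*x1*x2*y2*a - 2*x1*x2*y2^+2*l + 3*x1*x2^+2*a*l - 3*x1*x2^+2*y2*l^+2 - 4*x1*x2^+3*l^+3 + 2*x1*x2^+3*y2 + 4*x1*x2^+4*l + x1*y1*y2^+2 - 2*x1*y1*x2*a - 3*x1*y1*x2^+2*l^+2 + x1*y1^+2*y2 + 2*x1*y1^+2*x2*l - x1*y1^+3 - x1^+2*y2*a + x1^+2*y2^+2*l - 3*x1^+2*x2*a*l + 3*x1^+2*x2*y2*l^+2 + 6*x1^+2*x2^+2*l^+3 + 3*x1^+2*x2^+2*y2 + x1^+2*x2^+3*l + x1^+2*y1*a + 3*x1^+2*y1*x2*l^+2 + 3*x1^+2*y1*x2^+2 - x1^+2*y1^+2*l + x1^+3*a*l - x1^+3*y2*l^+2 - 4*x1^+3*x2*l^+3 - 4*x1^+3*x2*y2 - 7*x1^+3*x2^+2*l - x1^+3*y1*l^+2 - 6*x1^+3*y1*x2 + x1^+4*l^+3 + x1^+4*y2 + 5*x1^+4*x2*l + 3*x1^+4*y1 - x1^+5*l)) * ((l * (x2 - x1)) - (y2 - y1))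
  + ((- x2^+2*a + x2^+4 + 2*y1*x2*y2 - y1^+2*x2 + x1*x2*a - 4*x1*x2^+3 - 2*x1*y1*y2 + x1*y1^+2 + 3*x1^+2*x2^+2 + x1^+3*x2 - x1^+4)) * (y1 ^+ 2 - (x1 ^+ 3 + a * x1))
  + ((x2*y2^+2 - x2^+4 - 2*y1*x2*y2 - x1*y2^+2 + x1*x2*a + x1*x2^+3 + 2*x1*y1*y2 - x1^+2*a + 3*x1^+2*x2^+2 - 4*x1^+3*x2 + x1^+4)) * (y2 ^+ 2 - (x2 ^+ 3 + a * x2))).
Qed.

Lemma tangent_on_curve (a x1 y1 l x3 y3 : F) :
  y1 ^+ 2 = x1 ^+ 3 + a * x1 ->
  l * (2 * y1) = 3 * x1 ^+ 2 + a -> x3 = l ^+ 2 - x1 - x1 -> y3 = l * (x1 - x3) - y1 ->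
  2 * y1 != 0 ->
  y3 ^+ 2 = x3 ^+ 3 + a * x3.
Proof.
certificate
  ((2 * y1) ^+ 2)
  (((2 * y1) ^+ 2 * (y3 - l*x3 - y1 + x1*l)) * (y3 - ((l * (x1 - x3)) - y1))
  + ((2 * y1) ^+ 2 * (- x3^+2 - a + 2*y1*l + 2*x1*x3 - 4*x1^+2)) * (x3 - ((l ^+ 2 - x1) - x1))
  + ((4*y1^+2*l^+2 - 12*x1*y1^+2)) * ((l * (2 * y1)) - ((3 * x1 ^+ 2) + a))
  + ((4*y1^+2)) * (y1 ^+ 2 - (x1 ^+ 3 + a * x1))).
Qed.

Lemma tangent_x_sqr (a x1 y1 l x3 : F) :
  y1 ^+ 2 = x1 ^+ 3 + a * x1 ->
  l * (2 * y1) = 3 * x1 ^+ 2 + a -> x3 = l ^+ 2 - x1 - x1 ->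
  2 * y1 != 0 ->
  x3 * (2 * y1) ^+ 2 = (x1 ^+ 2 - a) ^+ 2.
Proof.
certificate
  ((2 * y1) ^+ 2)
  (((2 * y1) ^+ 2 * (4*y1^+2)) * (x3 - ((l ^+ 2 - x1) - x1))
  + ((4*y1^+2*a + 8*y1^+3*l + 12*x1^+2*y1^+2)) * ((l * (2 * y1)) - ((3 * x1 ^+ 2) + a))
  + ((- 32*x1*y1^+2)) * (y1 ^+ 2 - (x1 ^+ 3 + a * x1))).
Qed.

Lemma to_edwards_on_poly (r w x y X Y : F) :
  y ^+ 2 = x ^+ 3 + r ^+ 2 * x -> w ^+ 2 = 2 * r ->
  X * (x ^+ 2 + r ^+ 2) = w * y -> Y * (x + r) = x - r ->
  x ^+ 2 + r ^+ 2 != 0 -> x + r != 0 ->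
  X ^+ 2 + Y ^+ 2 = 1 - X ^+ 2 * Y ^+ 2.
Proof.
certificate
  ((x ^+ 2 + r ^+ 2) ^+ 2 * (x + r) ^+ 2)
  (((x + r) ^+ 2 * (r^+2*X + r^+2*X*Y^+2 + y*w + y*w*Y^+2 + x^+2*X + x^+2*X*Y^+2)) * ((X * (x ^+ 2 + r ^+ 2)) - w * y)
  + ((- r^+5 + r^+5*Y - y^+2*r*w^+2 + y^+2*r*w^+2*Y + x*r^+4 + x*r^+4*Y + x*y^+2*w^+2 + x*y^+2*w^+2*Y - 2*x^+2*r^+3 + 2*x^+2*r^+3*Y + 2*x^+3*r^+2 + 2*x^+3*r^+2*Y - x^+4*r + x^+4*r*Y + x^+5 + x^+5*Y)) * ((Y * (x + r)) - (x - r))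
  + ((2*r^+2*w^+2 + 2*x^+2*w^+2)) * (y ^+ 2 - (x ^+ 3 + r ^+ 2 * x))
  + ((2*x*r^+4 + 4*x^+3*r^+2 + 2*x^+5)) * (w ^+ 2 - (2 * r))).
Qed.

Lemma to_edwards_chord_x (r w x1 y1 x2 y2 l x3 y3 X1 Y1 X2 Y2 X3 U : F) :
  y1 ^+ 2 = x1 ^+ 3 + r ^+ 2 * x1 -> y2 ^+ 2 = x2 ^+ 3 + r ^+ 2 * x2 ->
  w ^+ 2 = 2 * r ->
  l * (x2 - x1) = y2 - y1 -> x3 = l ^+ 2 - x1 - x2 -> y3 = l * (x1 - x3) - y1 ->
  X1 * (x1 ^+ 2 + r ^+ 2) = w * y1 -> Y1 * (x1 + r) = x1 - r ->
  X2 * (x2 ^+ 2 + r ^+ 2) = w * y2 -> Y2 * (x2 + r) = x2 - r ->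
  X3 * (x3 ^+ 2 + r ^+ 2) = w * y3 ->
  U * (1 - X1 * X2 * Y1 * Y2) = X1 * Y2 + Y1 * X2 ->
  x1 ^+ 2 + r ^+ 2 != 0 -> x1 + r != 0 -> x2 ^+ 2 + r ^+ 2 != 0 -> x2 + r != 0 ->
  x3 ^+ 2 + r ^+ 2 != 0 -> x2 - x1 != 0 -> 1 - X1 * X2 * Y1 * Y2 != 0 ->
  U = X3.
Proof.
certificate
  ((1 - X1 * X2 * Y1 * Y2) * (x3 ^+ 2 + r ^+ 2) * (x1 ^+ 2 + r ^+ 2) * (x1 + r) * (x2 ^+ 2 + r ^+ 2) * (x2 + r) * (x2 - x1) ^+ 4)
  (((x3 ^+ 2 + r ^+ 2) * (x1 ^+ 2 + r ^+ 2) * (x1 + r) * (x2 ^+ 2 + r ^+ 2) * (x2 + r) * (x2 - x1) ^+ 4) * ((U * (1 - X1 * X2 * Y1 * Y2)) - (X1 * Y2 + Y1 * X2))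
  + ((x1 ^+ 2 + r ^+ 2) * (x1 + r) * (x2 ^+ 2 + r ^+ 2) * (x2 + r) * (x2 - x1) ^+ 4 * (- 1 + X1*Y1*X2*Y2)) * ((X3 * (x3 ^+ 2 + r ^+ 2)) - w * y3)
  + ((x1 ^+ 2 + r ^+ 2) * (x1 + r) * (x2 ^+ 2 + r ^+ 2) * (x2 + r) * (x2 - x1) ^+ 4 * (- w + w*X1*Y1*X2*Y2)) * (y3 - ((l * (x1 - x3)) - y1))
  + ((x1 ^+ 2 + r ^+ 2) * (x1 + r) * (x2 ^+ 2 + r ^+ 2) * (x2 + r) * (x2 - x1) ^+ 4 * (x3*Y1*X2 + x3*X1*Y2 + l^+2*Y1*X2 + l^+2*X1*Y2 + w*l - w*l*X1*Y1*X2*Y2 - x2*Y1*X2 - x2*X1*Y2 - x1*Y1*X2 - x1*X1*Y2)) * (x3 - ((l ^+ 2 - x1) - x2))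
  + ((x1 + r) * (x2 ^+ 2 + r ^+ 2) * (x2 + r) * (x2 - x1) ^+ 4 * (l^+4*Y2 - w*l^+3*Y1*X2*Y2 + r^+2*Y2 - 2*x2*l^+2*Y2 + x2*w*l*Y1*X2*Y2 + x2^+2*Y2 - y1*w*Y1*X2*Y2 - 2*x1*l^+2*Y2 + 2*x1*w*l*Y1*X2*Y2 + 2*x1*x2*Y2 + x1^+2*Y2)) * ((X1 * (x1 ^+ 2 + r ^+ 2)) - w * y1)
  + ((x2 ^+ 2 + r ^+ 2) * (x2 + r) * (x2 - x1) ^+ 4 * (r^+2*l^+4*X2 + r^+4*X2 - 2*x2*r^+2*l^+2*X2 + x2^+2*r^+2*X2 - y1*w^+2*l^+3*X2*Y2 + y1*x2*w^+2*l*X2*Y2 - y1^+2*w^+2*X2*Y2 - 2*x1*r^+2*l^+2*X2 + 2*x1*x2*r^+2*X2 + 2*x1*y1*w^+2*l*X2*Y2 + x1^+2*l^+4*X2 + 2*x1^+2*r^+2*X2 - 2*x1^+2*x2*l^+2*X2 + x1^+2*x2^+2*X2 - 2*x1^+3*l^+2*X2 + 2*x1^+3*x2*X2 + x1^+4*X2)) * ((Y1 * (x1 + r)) - (x1 - r))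
  + ((x2 + r) * (x2 - x1) ^+ 4 * (- r^+3*l^+4 - r^+5 + 2*x2*r^+3*l^+2 - x2^+2*r^+3 + y1*r*w^+2*l^+3*Y2 - y1*x2*r*w^+2*l*Y2 + y1^+2*r*w^+2*Y2 + x1*r^+2*l^+4 + 2*x1*r^+3*l^+2 + x1*r^+4 - 2*x1*x2*r^+2*l^+2 - 2*x1*x2*r^+3 + x1*x2^+2*r^+2 - x1*y1*w^+2*l^+3*Y2 - 2*x1*y1*r*w^+2*l*Y2 + x1*y1*x2*w^+2*l*Y2 - x1*y1^+2*w^+2*Y2 - x1^+2*r*l^+4 - 2*x1^+2*r^+2*l^+2 - 2*x1^+2*r^+3 + 2*x1^+2*x2*r*l^+2 + 2*x1^+2*x2*r^+2 - x1^+2*x2^+2*r + 2*x1^+2*y1*w^+2*l*Y2 + x1^+3*l^+4 + 2*x1^+3*r*l^+2 + 2*x1^+3*r^+2 - 2*x1^+3*x2*l^+2 - 2*x1^+3*x2*r + x1^+3*x2^+2 - 2*x1^+4*l^+2 - x1^+4*r + 2*x1^+4*x2 + x1^+5)) * ((X2 * (x2 ^+ 2 + r ^+ 2)) - w * y2)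
  + ((x2 - x1) ^+ 4 * (y1*r^+3*w*l^+4 + y1*r^+5*w + y1*y2*r*w^+3*l^+3 - 2*y1*x2*r^+3*w*l^+2 - y1*x2*y2*r*w^+3*l + y1*x2^+2*r*w*l^+4 + 2*y1*x2^+2*r^+3*w - 2*y1*x2^+3*r*w*l^+2 + y1*x2^+4*r*w + y1^+2*y2*r*w^+3 + x1*y1*r^+2*w*l^+4 - 2*x1*y1*r^+3*w*l^+2 + x1*y1*r^+4*w - x1*y1*y2*w^+3*l^+3 - 2*x1*y1*y2*r*w^+3*l - 2*x1*y1*x2*r^+2*w*l^+2 + 2*x1*y1*x2*r^+3*w + x1*y1*x2*y2*w^+3*l + x1*y1*x2^+2*w*l^+4 - 2*x1*y1*x2^+2*r*w*l^+2 + 2*x1*y1*x2^+2*r^+2*w - 2*x1*y1*x2^+3*w*l^+2 + 2*x1*y1*x2^+3*r*w + x1*y1*x2^+4*w - x1*y1^+2*y2*w^+3 - 2*x1^+2*y1*r^+2*w*l^+2 + x1^+2*y1*r^+3*w + 2*x1^+2*y1*y2*w^+3*l + 2*x1^+2*y1*x2*r^+2*w - 2*x1^+2*y1*x2^+2*w*l^+2 + x1^+2*y1*x2^+2*r*w + 2*x1^+2*y1*x2^+3*w + x1^+3*y1*r^+2*w + x1^+3*y1*x2^+2*w)) * ((Y2 * (x2 + r)) - (x2 - r))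
  + ((- y2^+4*r^+4*w + x2*y2^+2*r^+6*w - x2*y2^+3*r^+4*w*l - x2*y2^+4*r^+3*w + x2^+2*y2*r^+6*w*l - x2^+2*y2^+2*r^+4*w*l^+2 + x2^+2*y2^+2*r^+5*w - x2^+2*y2^+3*r^+3*w*l + x2^+3*r^+6*w*l^+2 - x2^+3*y2*r^+4*w*l^+3 + x2^+3*y2*r^+5*w*l - x2^+3*y2^+2*r^+3*w*l^+2 + 3*x2^+3*y2^+2*r^+4*w + x2^+4*r^+5*w*l^+2 - x2^+4*r^+6*w - x2^+4*y2*r^+3*w*l^+3 + 3*x2^+4*y2*r^+4*w*l + 3*x2^+4*y2^+2*r^+3*w + x2^+5*r^+4*w*l^+2 - x2^+5*r^+5*w + 3*x2^+5*y2*r^+3*w*l + x2^+6*r^+3*w*l^+2 - x2^+6*r^+4*w - x2^+7*r^+3*w + 2*y1*y2^+3*r^+4*w - 2*y1*x2*y2*r^+6*w + y1*x2*y2^+2*r^+4*w*l - y1*x2*y2^+3*r^+2*w^+3 + 4*y1*x2*y2^+3*r^+3*w - y1*x2^+2*r^+6*w*l - 2*y1*x2^+2*y2*r^+5*w - y1*x2^+2*y2^+2*r^+2*w^+3*l + 3*y1*x2^+2*y2^+2*r^+3*w*l + y1*x2^+2*y2^+3*r*w^+3 - y1*x2^+2*y2^+3*r^+2*w - y1*x2^+3*r^+4*w*l^+3 - y1*x2^+3*r^+5*w*l - y1*x2^+3*y2*r^+2*w^+3*l^+2 + 2*y1*x2^+3*y2*r^+3*w*l^+2 - 2*y1*x2^+3*y2*r^+4*w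 + y1*x2^+3*y2^+2*r*w^+3*l - y1*x2^+3*y2^+2*r^+2*w*l + y1*x2^+3*y2^+3*r*w + y1*x2^+4*r^+3*w*l^+3 + y1*x2^+4*r^+4*w*l + y1*x2^+4*y2*r*w^+3*l^+2 - y1*x2^+4*y2*r^+2*w*l^+2 + y1*x2^+4*y2*r^+2*w^+3 - 6*y1*x2^+4*y2*r^+3*w + y1*x2^+4*y2^+2*r*w*l - y1*x2^+5*r^+2*w*l^+3 - 3*y1*x2^+5*r^+3*w*l + y1*x2^+5*y2*r*w*l^+2 - y1*x2^+5*y2*r*w^+3 + 2*y1*x2^+5*y2*r^+2*w + y1*x2^+6*r*w*l^+3 + 2*y1*x2^+6*r^+2*w*l - 2*y1*x2^+6*y2*r*w - 2*y1*x2^+7*r*w*l + y1^+2*x2*r^+6*w + y1^+2*x2*y2*r^+4*w*l + 2*y1^+2*x2*y2^+2*r^+2*w^+3 - 6*y1^+2*x2*y2^+2*r^+3*w + y1^+2*x2^+2*r^+4*w*l^+2 + y1^+2*x2^+2*r^+5*w + y1^+2*x2^+2*y2*r^+2*w^+3*l - 3*y1^+2*x2^+2*y2*r^+3*w*l - 2*y1^+2*x2^+2*y2^+2*r*w^+3 + 3*y1^+2*x2^+2*y2^+2*r^+2*w - y1^+2*x2^+3*r^+3*w*l^+2 - y1^+2*x2^+3*r^+4*w - y1^+2*x2^+3*y2*r*w^+3*l + 2*y1^+2*x2^+3*y2*r^+2*w*l - 3*y1^+2*x2^+3*y2^+2*r*w + y1^+2*x2^+4*r^+2*w*l^+2 +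 3*y1^+2*x2^+4*r^+3*w - 2*y1^+2*x2^+4*y2*r*w*l - y1^+2*x2^+5*r*w*l^+2 - 2*y1^+2*x2^+5*r^+2*w + 2*y1^+2*x2^+6*r*w - 2*y1^+3*y2*r^+4*w - y1^+3*x2*r^+4*w*l - y1^+3*x2*y2*r^+2*w^+3 + 4*y1^+3*x2*y2*r^+3*w + y1^+3*x2^+2*r^+3*w*l + y1^+3*x2^+2*y2*r*w^+3 - 3*y1^+3*x2^+2*y2*r^+2*w - y1^+3*x2^+3*r^+2*w*l + 3*y1^+3*x2^+3*y2*r*w + y1^+3*x2^+4*r*w*l + y1^+4*r^+4*w - y1^+4*x2*r^+3*w + y1^+4*x2^+2*r^+2*w - y1^+4*x2^+3*r*w - x1*y2^+2*r^+6*w + x1*y2^+3*r^+4*w*l + x1*y2^+4*r^+3*w - 2*x1*x2*y2*r^+6*w*l + 2*x1*x2*y2^+2*r^+4*w*l^+2 + 2*x1*x2*y2^+3*r^+3*w*l + x1*x2*y2^+4*r^+2*w - 3*x1*x2^+2*r^+6*w*l^+2 + 3*x1*x2^+2*y2*r^+4*w*l^+3 - x1*x2^+2*y2*r^+5*w*l + 3*x1*x2^+2*y2^+2*r^+3*w*l^+2 - 2*x1*x2^+2*y2^+2*r^+4*w + x1*x2^+2*y2^+3*r^+2*w*l - 2*x1*x2^+3*r^+5*w*l^+2 + x1*x2^+3*r^+6*w + 4*x1*x2^+3*y2*r^+3*w*l^+3 - 5*x1*x2^+3*y2*r^+4*w*l + x1*x2^+3*y2^+2*r^+2*w*l^+2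 - 4*x1*x2^+3*y2^+2*r^+3*w - 2*x1*x2^+4*r^+4*w*l^+2 + x1*x2^+4*y2*r^+2*w*l^+3 - 7*x1*x2^+4*y2*r^+3*w*l - x1*x2^+4*y2^+2*r^+2*w - 2*x1*x2^+5*r^+3*w*l^+2 - x1*x2^+5*y2*r^+2*w*l + x1*x2^+6*r^+2*w*l^+2 - x1*x2^+7*r^+2*w + 2*x1*y1*y2*r^+6*w - x1*y1*y2^+2*r^+4*w*l + x1*y1*y2^+3*r^+2*w^+3 - 4*x1*y1*y2^+3*r^+3*w + 2*x1*y1*x2*r^+6*w*l + 2*x1*y1*x2*y2^+2*r^+2*w^+3*l - 6*x1*y1*x2*y2^+2*r^+3*w*l - 2*x1*y1*x2*y2^+3*r^+2*w + 3*x1*y1*x2^+2*r^+4*w*l^+3 + x1*y1*x2^+2*r^+5*w*l + 3*x1*y1*x2^+2*y2*r^+2*w^+3*l^+2 - 6*x1*y1*x2^+2*y2*r^+3*w*l^+2 - x1*y1*x2^+2*y2^+2*r*w^+3*l - x1*y1*x2^+2*y2^+3*w^+3 - x1*y1*x2^+2*y2^+3*r*w - 4*x1*y1*x2^+3*r^+3*w*l^+3 - 3*x1*y1*x2^+3*r^+4*w*l - 2*x1*y1*x2^+3*y2*r*w^+3*l^+2 + 2*x1*y1*x2^+3*y2*r^+2*w*l^+2 - x1*y1*x2^+3*y2*r^+2*w^+3 + 8*x1*y1*x2^+3*y2*r^+3*w - x1*y1*x2^+3*y2^+2*w^+3*l - 2*x1*y1*x2^+3*y2^+2*r*w*l + x1*y1*x2^+3*y2^+3*w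 + 4*x1*y1*x2^+4*r^+2*w*l^+3 + 7*x1*y1*x2^+4*r^+3*w*l - x1*y1*x2^+4*y2*w^+3*l^+2 - 3*x1*y1*x2^+4*y2*r*w*l^+2 - 4*x1*y1*x2^+4*y2*r^+2*w + x1*y1*x2^+4*y2^+2*w*l - 4*x1*y1*x2^+5*r*w*l^+3 - 7*x1*y1*x2^+5*r^+2*w*l + x1*y1*x2^+5*y2*w*l^+2 + x1*y1*x2^+5*y2*w^+3 + 4*x1*y1*x2^+5*y2*r*w + x1*y1*x2^+6*w*l^+3 + 6*x1*y1*x2^+6*r*w*l - 2*x1*y1*x2^+6*y2*w - 2*x1*y1*x2^+7*w*l - x1*y1^+2*r^+6*w - x1*y1^+2*y2*r^+4*w*l - 2*x1*y1^+2*y2^+2*r^+2*w^+3 + 6*x1*y1^+2*y2^+2*r^+3*w - 2*x1*y1^+2*x2*r^+4*w*l^+2 - 2*x1*y1^+2*x2*y2*r^+2*w^+3*l + 6*x1*y1^+2*x2*y2*r^+3*w*l + 3*x1*y1^+2*x2^+2*r^+3*w*l^+2 + 2*x1*y1^+2*x2^+2*r^+4*w + x1*y1^+2*x2^+2*y2*r*w^+3*l - 3*x1*y1^+2*x2^+2*y2*r^+2*w*l + 2*x1*y1^+2*x2^+2*y2^+2*w^+3 + 3*x1*y1^+2*x2^+2*y2^+2*r*w - 3*x1*y1^+2*x2^+3*r^+2*w*l^+2 - 4*x1*y1^+2*x2^+3*r^+3*w + x1*y1^+2*x2^+3*y2*w^+3*l + 4*x1*y1^+2*x2^+3*y2*r*w*l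 - 3*x1*y1^+2*x2^+3*y2^+2*w + 3*x1*y1^+2*x2^+4*r*w*l^+2 + 5*x1*y1^+2*x2^+4*r^+2*w - 2*x1*y1^+2*x2^+4*y2*w*l - x1*y1^+2*x2^+5*w*l^+2 - 4*x1*y1^+2*x2^+5*r*w + 2*x1*y1^+2*x2^+6*w + x1*y1^+3*r^+4*w*l + x1*y1^+3*y2*r^+2*w^+3 - 4*x1*y1^+3*y2*r^+3*w - 2*x1*y1^+3*x2*r^+3*w*l + 2*x1*y1^+3*x2*y2*r^+2*w + 2*x1*y1^+3*x2^+2*r^+2*w*l - x1*y1^+3*x2^+2*y2*w^+3 - 3*x1*y1^+3*x2^+2*y2*r*w - 2*x1*y1^+3*x2^+3*r*w*l + 3*x1*y1^+3*x2^+3*y2*w + x1*y1^+3*x2^+4*w*l + x1*y1^+4*r^+3*w - x1*y1^+4*x2*r^+2*w + x1*y1^+4*x2^+2*r*w - x1*y1^+4*x2^+3*w + x1^+2*y2*r^+6*w*l - x1^+2*y2^+2*r^+4*w*l^+2 - x1^+2*y2^+2*r^+5*w - x1^+2*y2^+3*r^+3*w*l - x1^+2*y2^+4*r^+2*w + 3*x1^+2*x2*r^+6*w*l^+2 - 3*x1^+2*x2*y2*r^+4*w*l^+3 - x1^+2*x2*y2*r^+5*w*l - 3*x1^+2*x2*y2^+2*r^+3*w*l^+2 - 2*x1^+2*x2*y2^+2*r^+4*w - 2*x1^+2*x2*y2^+3*r^+2*w*l - x1^+2*x2*y2^+4*r*w + 3*x1^+2*x2^+2*r^+6*w - 6*x1^+2*x2^+2*y2*r^+3*w*l^+3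 - 3*x1^+2*x2^+2*y2^+2*r^+2*w*l^+2 - x1^+2*x2^+2*y2^+3*r*w*l + x1^+2*x2^+3*r^+4*w*l^+2 + 4*x1^+2*x2^+3*r^+5*w - 4*x1^+2*x2^+3*y2*r^+2*w*l^+3 + 4*x1^+2*x2^+3*y2*r^+3*w*l - x1^+2*x2^+3*y2^+2*r*w*l^+2 + 4*x1^+2*x2^+3*y2^+2*r^+2*w + x1^+2*x2^+4*r^+3*w*l^+2 + 3*x1^+2*x2^+4*r^+4*w - x1^+2*x2^+4*y2*r*w*l^+3 + 5*x1^+2*x2^+4*y2*r^+2*w*l + 3*x1^+2*x2^+4*y2^+2*r*w - 2*x1^+2*x2^+5*r^+2*w*l^+2 + 3*x1^+2*x2^+5*r^+3*w + 3*x1^+2*x2^+5*y2*r*w*l + x1^+2*x2^+6*r*w*l^+2 - x1^+2*x2^+7*r*w - x1^+2*y1*r^+6*w*l + 2*x1^+2*y1*y2*r^+5*w - x1^+2*y1*y2^+2*r^+2*w^+3*l + 3*x1^+2*y1*y2^+2*r^+3*w*l - x1^+2*y1*y2^+3*r*w^+3 + 3*x1^+2*y1*y2^+3*r^+2*w - 3*x1^+2*y1*x2*r^+4*w*l^+3 + x1^+2*y1*x2*r^+5*w*l - 3*x1^+2*y1*x2*y2*r^+2*w^+3*l^+2 + 6*x1^+2*y1*x2*y2*r^+3*w*l^+2 - x1^+2*y1*x2*y2^+2*r*w^+3*l + 3*x1^+2*y1*x2*y2^+2*r^+2*w*l + x1^+2*y1*x2*y2^+3*w^+3 + 3*x1^+2*y1*x2*y2^+3*r*w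 + 6*x1^+2*y1*x2^+2*r^+3*w*l^+3 - 3*x1^+2*y1*x2^+2*y2*r^+2*w^+3 + 2*x1^+2*y1*x2^+2*y2^+2*w^+3*l + 3*x1^+2*y1*x2^+2*y2^+2*r*w*l - 6*x1^+2*y1*x2^+3*r^+2*w*l^+3 - 4*x1^+2*y1*x2^+3*r^+3*w*l + 3*x1^+2*y1*x2^+3*y2*w^+3*l^+2 + 4*x1^+2*y1*x2^+3*y2*r*w*l^+2 + 4*x1^+2*y1*x2^+3*y2*r*w^+3 - 4*x1^+2*y1*x2^+3*y2*r^+2*w - x1^+2*y1*x2^+3*y2^+2*w*l + 6*x1^+2*y1*x2^+4*r*w*l^+3 + 5*x1^+2*y1*x2^+4*r^+2*w*l - 2*x1^+2*y1*x2^+4*y2*w*l^+2 - x1^+2*y1*x2^+4*y2*w^+3 - 4*x1^+2*y1*x2^+4*y2*r*w - 3*x1^+2*y1*x2^+5*w*l^+3 - 5*x1^+2*y1*x2^+5*r*w*l + 2*x1^+2*y1*x2^+5*y2*w + 4*x1^+2*y1*x2^+6*w*l + x1^+2*y1^+2*r^+4*w*l^+2 - x1^+2*y1^+2*r^+5*w + x1^+2*y1^+2*y2*r^+2*w^+3*l - 3*x1^+2*y1^+2*y2*r^+3*w*l + 2*x1^+2*y1^+2*y2^+2*r*w^+3 - 3*x1^+2*y1^+2*y2^+2*r^+2*w - 3*x1^+2*y1^+2*x2*r^+3*w*l^+2 + 2*x1^+2*y1^+2*x2*r^+4*w + x1^+2*y1^+2*x2*y2*r*w^+3*l - 2*x1^+2*y1^+2*x2*y2^+2*w^+3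 - 3*x1^+2*y1^+2*x2*y2^+2*r*w + 3*x1^+2*y1^+2*x2^+2*r^+2*w*l^+2 - 2*x1^+2*y1^+2*x2^+2*y2*w^+3*l - 3*x1^+2*y1^+2*x2^+2*y2*r*w*l - 3*x1^+2*y1^+2*x2^+3*r*w*l^+2 + 2*x1^+2*y1^+2*x2^+3*y2*w*l + 2*x1^+2*y1^+2*x2^+4*w*l^+2 + x1^+2*y1^+2*x2^+4*r*w - 2*x1^+2*y1^+2*x2^+5*w + x1^+2*y1^+3*r^+3*w*l - x1^+2*y1^+3*y2*r*w^+3 + x1^+2*y1^+3*y2*r^+2*w - x1^+2*y1^+3*x2*r^+2*w*l + x1^+2*y1^+3*x2*y2*w^+3 + x1^+2*y1^+3*x2*y2*r*w + x1^+2*y1^+3*x2^+2*r*w*l - x1^+2*y1^+3*x2^+3*w*l - x1^+3*r^+6*w*l^+2 + x1^+3*y2*r^+4*w*l^+3 + x1^+3*y2*r^+5*w*l + x1^+3*y2^+2*r^+3*w*l^+2 + x1^+3*y2^+2*r^+4*w + x1^+3*y2^+3*r^+2*w*l + x1^+3*y2^+4*r*w + 2*x1^+3*x2*r^+5*w*l^+2 - 5*x1^+3*x2*r^+6*w + 4*x1^+3*x2*y2*r^+3*w*l^+3 + 3*x1^+3*x2*y2*r^+4*w*l + 3*x1^+3*x2*y2^+2*r^+2*w*l^+2 + 4*x1^+3*x2*y2^+2*r^+3*w + 2*x1^+3*x2*y2^+3*r*w*l + x1^+3*x2*y2^+4*w - x1^+3*x2^+2*r^+4*w*l^+2 - 2*x1^+3*x2^+2*r^+5*w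 + 6*x1^+3*x2^+2*y2*r^+2*w*l^+3 + 4*x1^+3*x2^+2*y2*r^+3*w*l + 3*x1^+3*x2^+2*y2^+2*r*w*l^+2 + x1^+3*x2^+2*y2^+3*w*l - x1^+3*x2^+3*r^+4*w + 4*x1^+3*x2^+3*y2*r*w*l^+3 - 4*x1^+3*x2^+3*y2*r^+2*w*l + x1^+3*x2^+3*y2^+2*w*l^+2 - 4*x1^+3*x2^+3*y2^+2*r*w + x1^+3*x2^+4*r^+2*w*l^+2 - 2*x1^+3*x2^+4*r^+3*w + x1^+3*x2^+4*y2*w*l^+3 - 7*x1^+3*x2^+4*y2*r*w*l - x1^+3*x2^+4*y2^+2*w - 2*x1^+3*x2^+5*r*w*l^+2 + 3*x1^+3*x2^+5*r^+2*w - x1^+3*x2^+5*y2*w*l + x1^+3*x2^+6*w*l^+2 - x1^+3*x2^+7*w + x1^+3*y1*r^+4*w*l^+3 - x1^+3*y1*r^+5*w*l + x1^+3*y1*y2*r^+2*w^+3*l^+2 - 2*x1^+3*y1*y2*r^+3*w*l^+2 + 2*x1^+3*y1*y2*r^+4*w + x1^+3*y1*y2^+2*r*w^+3*l - 2*x1^+3*y1*y2^+2*r^+2*w*l - 3*x1^+3*y1*y2^+3*r*w - 4*x1^+3*y1*x2*r^+3*w*l^+3 + 5*x1^+3*y1*x2*r^+4*w*l + 2*x1^+3*y1*x2*y2*r*w^+3*l^+2 - 2*x1^+3*y1*x2*y2*r^+2*w*l^+2 + 5*x1^+3*y1*x2*y2*r^+2*w^+3 - 8*x1^+3*y1*x2*y2*r^+3*w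 - x1^+3*y1*x2*y2^+2*w^+3*l - 4*x1^+3*y1*x2*y2^+2*r*w*l - 3*x1^+3*y1*x2*y2^+3*w + 4*x1^+3*y1*x2^+2*r^+2*w*l^+3 - 4*x1^+3*y1*x2^+2*r^+3*w*l - 3*x1^+3*y1*x2^+2*y2*w^+3*l^+2 - 4*x1^+3*y1*x2^+2*y2*r*w*l^+2 - 2*x1^+3*y1*x2^+2*y2*r*w^+3 + 4*x1^+3*y1*x2^+2*y2*r^+2*w - 2*x1^+3*y1*x2^+2*y2^+2*w*l - 4*x1^+3*y1*x2^+3*r*w*l^+3 + 4*x1^+3*y1*x2^+3*r^+2*w*l - 3*x1^+3*y1*x2^+3*y2*w^+3 + 3*x1^+3*y1*x2^+4*w*l^+3 - 3*x1^+3*y1*x2^+4*r*w*l + 2*x1^+3*y1*x2^+4*y2*w - x1^+3*y1*x2^+5*w*l + x1^+3*y1^+2*r^+3*w*l^+2 - 3*x1^+3*y1^+2*r^+4*w - x1^+3*y1^+2*y2*r*w^+3*l + x1^+3*y1^+2*y2*r^+2*w*l + 3*x1^+3*y1^+2*y2^+2*r*w - x1^+3*y1^+2*x2*r^+2*w*l^+2 + 4*x1^+3*y1^+2*x2*r^+3*w + x1^+3*y1^+2*x2*y2*w^+3*l + 2*x1^+3*y1^+2*x2*y2*r*w*l + 3*x1^+3*y1^+2*x2*y2^+2*w + x1^+3*y1^+2*x2^+2*r*w*l^+2 - 4*x1^+3*y1^+2*x2^+2*r^+2*w + x1^+3*y1^+2*x2^+2*y2*w*l - x1^+3*y1^+2*x2^+3*w*l^+2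 + 4*x1^+3*y1^+2*x2^+3*r*w - x1^+3*y1^+2*x2^+4*w - x1^+3*y1^+3*y2*r*w - x1^+3*y1^+3*x2*y2*w - x1^+4*r^+5*w*l^+2 + 2*x1^+4*r^+6*w - x1^+4*y2*r^+3*w*l^+3 - x1^+4*y2*r^+4*w*l - x1^+4*y2^+2*r^+2*w*l^+2 - 3*x1^+4*y2^+2*r^+3*w - x1^+4*y2^+3*r*w*l + 2*x1^+4*x2*r^+4*w*l^+2 - 3*x1^+4*x2*r^+5*w - 4*x1^+4*x2*y2*r^+2*w*l^+3 - 7*x1^+4*x2*y2*r^+3*w*l - 3*x1^+4*x2*y2^+2*r*w*l^+2 - 5*x1^+4*x2*y2^+2*r^+2*w - x1^+4*x2*y2^+3*w*l - x1^+4*x2^+2*r^+3*w*l^+2 - 6*x1^+4*x2^+2*y2*r*w*l^+3 - 5*x1^+4*x2^+2*y2*r^+2*w*l - 2*x1^+4*x2^+2*y2^+2*w*l^+2 - x1^+4*x2^+2*y2^+2*r*w - x1^+4*x2^+3*r^+2*w*l^+2 + x1^+4*x2^+3*r^+3*w - 3*x1^+4*x2^+3*y2*w*l^+3 + 3*x1^+4*x2^+3*y2*r*w*l + x1^+4*x2^+3*y2^+2*w - x1^+4*x2^+4*r^+2*w + 2*x1^+4*x2^+4*y2*w*l - 3*x1^+4*x2^+5*w*l^+2 + 4*x1^+4*x2^+5*r*w + x1^+4*x2^+6*w + x1^+4*y1*r^+3*w*l^+3 - 3*x1^+4*y1*r^+4*w*l - x1^+4*y1*y2*r*w^+3*l^+2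 + x1^+4*y1*y2*r^+2*w*l^+2 - 2*x1^+4*y1*y2*r^+2*w^+3 + 6*x1^+4*y1*y2*r^+3*w + 2*x1^+4*y1*y2^+2*r*w*l - x1^+4*y1*x2*r^+2*w*l^+3 + 7*x1^+4*y1*x2*r^+3*w*l + x1^+4*y1*x2*y2*w^+3*l^+2 + 3*x1^+4*y1*x2*y2*r*w*l^+2 - 3*x1^+4*y1*x2*y2*r*w^+3 + 4*x1^+4*y1*x2*y2*r^+2*w + 2*x1^+4*y1*x2*y2^+2*w*l + x1^+4*y1*x2^+2*r*w*l^+3 - 5*x1^+4*y1*x2^+2*r^+2*w*l + 2*x1^+4*y1*x2^+2*y2*w*l^+2 + 5*x1^+4*y1*x2^+2*y2*w^+3 + 4*x1^+4*y1*x2^+2*y2*r*w - x1^+4*y1*x2^+3*w*l^+3 + 7*x1^+4*y1*x2^+3*r*w*l - 2*x1^+4*y1*x2^+3*y2*w - 2*x1^+4*y1*x2^+4*w*l - 3*x1^+4*y1^+2*r^+3*w - x1^+4*y1^+2*y2*r*w*l + x1^+4*y1^+2*x2*r^+2*w - x1^+4*y1^+2*x2*y2*w*l - 3*x1^+4*y1^+2*x2^+2*r*w + x1^+4*y1^+2*x2^+3*w - x1^+5*r^+4*w*l^+2 + 2*x1^+5*r^+5*w + x1^+5*y2*r^+2*w*l^+3 + 3*x1^+5*y2*r^+3*w*l + x1^+5*y2^+2*r*w*l^+2 + 2*x1^+5*y2^+2*r^+2*w + 2*x1^+5*x2*r^+3*w*l^+2 - 3*x1^+5*x2*r^+4*w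 + 4*x1^+5*x2*y2*r*w*l^+3 + 7*x1^+5*x2*y2*r^+2*w*l + x1^+5*x2*y2^+2*w*l^+2 + 4*x1^+5*x2*y2^+2*r*w + 2*x1^+5*x2^+2*r^+2*w*l^+2 + 3*x1^+5*x2^+2*y2*w*l^+3 + 5*x1^+5*x2^+2*y2*r*w*l + 2*x1^+5*x2^+2*y2^+2*w + 2*x1^+5*x2^+3*r*w*l^+2 + x1^+5*x2^+3*y2*w*l + 3*x1^+5*x2^+4*w*l^+2 - 2*x1^+5*x2^+4*r*w + 3*x1^+5*x2^+5*w - 3*x1^+5*y1*r^+3*w*l - x1^+5*y1*y2*r*w*l^+2 + 2*x1^+5*y1*y2*r*w^+3 - 2*x1^+5*y1*y2*r^+2*w + x1^+5*y1*x2*r^+2*w*l - x1^+5*y1*x2*y2*w*l^+2 - 2*x1^+5*y1*x2*y2*w^+3 - 4*x1^+5*y1*x2*y2*r*w - 3*x1^+5*y1*x2^+2*r*w*l - 2*x1^+5*y1*x2^+2*y2*w + x1^+5*y1*x2^+3*w*l - x1^+6*r^+3*w*l^+2 + 2*x1^+6*r^+4*w - x1^+6*y2*r*w*l^+3 - 2*x1^+6*y2*r^+2*w*l - 2*x1^+6*y2^+2*r*w - x1^+6*x2*r^+2*w*l^+2 - 3*x1^+6*x2*r^+3*w - x1^+6*x2*y2*w*l^+3 - 6*x1^+6*x2*y2*r*w*l - 2*x1^+6*x2*y2^+2*w - x1^+6*x2^+2*r*w*l^+2 - 3*x1^+6*x2^+2*r^+2*w - 4*x1^+6*x2^+2*y2*w*l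 - x1^+6*x2^+3*w*l^+2 - 3*x1^+6*x2^+3*r*w - 5*x1^+6*x2^+4*w + 2*x1^+6*y1*y2*r*w + 2*x1^+6*y1*x2*y2*w + 2*x1^+7*r^+3*w + 2*x1^+7*y2*r*w*l + 2*x1^+7*x2*r^+2*w + 2*x1^+7*x2*y2*w*l + 2*x1^+7*x2^+2*r*w + 2*x1^+7*x2^+3*w)) * ((l * (x2 - x1)) - (y2 - y1))
  + ((- 2*y2^+3*r^+4*w + 3*x2*y2*r^+6*w + 3*x2*y2^+3*r^+2*w^+3 - 10*x2*y2^+3*r^+3*w + 3*x2^+2*y2*r^+5*w - 3*x2^+2*y2^+3*r*w^+3 + 4*x2^+2*y2^+3*r^+2*w + x2^+3*y2*r^+4*w - 4*x2^+3*y2^+3*r*w - 2*x2^+4*y2*r^+2*w^+3 + 9*x2^+4*y2*r^+3*w + 2*x2^+5*y2*r*w^+3 - 4*x2^+5*y2*r^+2*w + 4*x2^+6*y2*r*w - 2*y1*y2^+2*r^+4*w - y1*x2*r^+6*w - 3*y1*x2*y2^+2*r^+2*w^+3 + 10*y1*x2*y2^+2*r^+3*w - y1*x2^+2*r^+5*w + 3*y1*x2^+2*y2^+2*r*w^+3 - 6*y1*x2^+2*y2^+2*r^+2*w + y1*x2^+3*r^+4*w + 6*y1*x2^+3*y2^+2*r*w - 3*y1*x2^+4*r^+3*w + 2*y1*x2^+5*r^+2*w - 2*y1*x2^+6*r*w + 3*y1^+2*y2*r^+4*w + y1^+2*x2*y2*r^+2*w^+3 - 5*y1^+2*x2*y2*r^+3*w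 - y1^+2*x2^+2*y2*r*w^+3 + 4*y1^+2*x2^+2*y2*r^+2*w - 4*y1^+2*x2^+3*y2*r*w - y1^+3*r^+4*w + y1^+3*x2*r^+3*w - y1^+3*x2^+2*r^+2*w + y1^+3*x2^+3*r*w - 3*x1*y2^+3*r^+2*w^+3 + 10*x1*y2^+3*r^+3*w + x1*x2*y2*r^+4*w^+3 - 5*x1*x2*y2*r^+5*w + 2*x1*x2*y2^+3*r^+2*w - x1*x2^+2*y2*r^+3*w^+3 + 6*x1*x2^+2*y2*r^+4*w + 3*x1*x2^+2*y2^+3*w^+3 + 4*x1*x2^+2*y2^+3*r*w + 5*x1*x2^+3*y2*r^+2*w^+3 - 16*x1*x2^+3*y2*r^+3*w - 4*x1*x2^+3*y2^+3*w - 3*x1*x2^+4*y2*r*w^+3 + 9*x1*x2^+4*y2*r^+2*w - 2*x1*x2^+5*y2*w^+3 - 8*x1*x2^+5*y2*r*w + 4*x1*x2^+6*y2*w + 3*x1*y1*y2^+2*r^+2*w^+3 - 10*x1*y1*y2^+2*r^+3*w + x1*y1*x2*r^+5*w + 2*x1*y1*x2*y2^+2*r^+2*w - 3*x1*y1*x2^+2*r^+4*w - 3*x1*y1*x2^+2*y2^+2*w^+3 - 6*x1*y1*x2^+2*y2^+2*r*w + 5*x1*y1*x2^+3*r^+3*w + 6*x1*y1*x2^+3*y2^+2*w - 5*x1*y1*x2^+4*r^+2*w + 4*x1*y1*x2^+5*r*w - 2*x1*y1*x2^+6*w - x1*y1^+2*y2*r^+2*w^+3 + 5*x1*y1^+2*y2*r^+3*w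 - 3*x1*y1^+2*x2*y2*r^+2*w + x1*y1^+2*x2^+2*y2*w^+3 + 4*x1*y1^+2*x2^+2*y2*r*w - 4*x1*y1^+2*x2^+3*y2*w - x1*y1^+3*r^+3*w + x1*y1^+3*x2*r^+2*w - x1*y1^+3*x2^+2*r*w + x1*y1^+3*x2^+3*w - x1^+2*y2*r^+4*w^+3 + 2*x1^+2*y2*r^+5*w + 3*x1^+2*y2^+3*r*w^+3 - 6*x1^+2*y2^+3*r^+2*w - x1^+2*x2*y2*r^+4*w - 3*x1^+2*x2*y2^+3*w^+3 - 6*x1^+2*x2*y2^+3*r*w - 2*x1^+2*x2^+2*y2*r^+2*w^+3 + 4*x1^+2*x2^+2*y2*r^+3*w - 2*x1^+2*x2^+3*y2*r*w^+3 + 5*x1^+2*x2^+4*y2*w^+3 + 5*x1^+2*x2^+4*y2*r*w - 4*x1^+2*x2^+5*y2*w - 3*x1^+2*y1*y2^+2*r*w^+3 + 4*x1^+2*y1*y2^+2*r^+2*w - x1^+2*y1*x2*r^+4*w + 3*x1^+2*y1*x2*y2^+2*w^+3 + 4*x1^+2*y1*x2*y2^+2*r*w - x1^+2*y1*x2^+2*r^+3*w + x1^+2*y1*x2^+3*r^+2*w - x1^+2*y1*x2^+4*r*w + 2*x1^+2*y1*x2^+5*w + x1^+2*y1^+2*y2*r*w^+3 - x1^+2*y1^+2*y2*r^+2*w - x1^+2*y1^+2*x2*y2*w^+3 - x1^+2*y1^+2*x2*y2*r*w + x1^+3*y2*r^+3*w^+3 - 3*x1^+3*y2*r^+4*w +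 6*x1^+3*y2^+3*r*w - x1^+3*x2*y2*r^+2*w^+3 + 6*x1^+3*x2*y2*r^+3*w + 6*x1^+3*x2*y2^+3*w + 3*x1^+3*x2^+2*y2*r*w^+3 - 4*x1^+3*x2^+2*y2*r^+2*w - 3*x1^+3*x2^+3*y2*w^+3 - 3*x1^+3*x2^+4*y2*w + 2*x1^+3*y1*r^+4*w - 4*x1^+3*y1*y2^+2*r*w - 3*x1^+3*y1*x2*r^+3*w - 4*x1^+3*y1*x2*y2^+2*w + 3*x1^+3*y1*x2^+2*r^+2*w - 3*x1^+3*y1*x2^+3*r*w + x1^+3*y1*x2^+4*w + x1^+3*y1^+2*y2*r*w + x1^+3*y1^+2*x2*y2*w - 3*x1^+4*y2*r^+3*w - 5*x1^+4*x2*y2*r^+2*w - 3*x1^+4*x2^+2*y2*r*w - x1^+4*x2^+3*y2*w + 2*x1^+4*y1*r^+3*w + 2*x1^+4*y1*x2^+2*r*w + x1^+5*y2*r^+2*w + 3*x1^+5*x2*y2*r*w + 2*x1^+5*x2^+2*y2*w - x1^+6*y2*r*w - x1^+6*x2*y2*w)) * (y1 ^+ 2 - (x1 ^+ 3 + r ^+ 2 * x1))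
  + ((- y2^+3*r^+4*w - x2*y2^+3*r^+3*w + 2*x2^+3*y2*r^+4*w + 2*x2^+4*y2*r^+3*w + 3*y1*y2^+2*r^+4*w - y1*x2*y2^+2*r^+2*w^+3 + 5*y1*x2*y2^+2*r^+3*w - y1*x2^+2*r^+4*w^+3 + 2*y1*x2^+2*r^+5*w + y1*x2^+2*y2^+2*r*w^+3 - y1*x2^+2*y2^+2*r^+2*w + y1*x2^+3*r^+3*w^+3 - 3*y1*x2^+3*r^+4*w + y1*x2^+3*y2^+2*r*w - 3*y1*x2^+4*r^+3*w + y1*x2^+5*r^+2*w - y1*x2^+6*r*w - 3*x1*y2*r^+6*w + x1*y2^+3*r^+3*w + 3*x1*x2*y2*r^+4*w^+3 - 9*x1*x2*y2*r^+5*w + x1*x2*y2^+3*r^+2*w - 3*x1*x2^+2*y2*r^+3*w^+3 + 3*x1*x2^+2*y2*r^+4*w - 7*x1*x2^+3*y2*r^+3*w + x1*y1*r^+6*w + x1*y1*y2^+2*r^+2*w^+3 - 5*x1*y1*y2^+2*r^+3*w - 2*x1*y1*x2*r^+4*w^+3 + 5*x1*y1*x2*r^+5*w - 3*x1*y1*x2*y2^+2*r^+2*w + 3*x1*y1*x2^+2*r^+3*w^+3 - 7*x1*y1*x2^+2*r^+4*w - x1*y1*x2^+2*y2^+2*w^+3 - x1*y1*x2^+2*y2^+2*r*w - x1*y1*x2^+3*r^+2*w^+3 + 12*x1*y1*x2^+3*r^+3*w + x1*y1*x2^+3*y2^+2*w - 5*x1*y1*x2^+4*r^+2*w + 3*x1*y1*x2^+5*r*w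 - x1*y1*x2^+6*w - 3*x1^+2*y2*r^+4*w^+3 + 9*x1^+2*y2*r^+5*w - x1^+2*y2^+3*r^+2*w - x1^+2*x2*y2*r^+4*w - x1^+2*x2*y2^+3*r*w + 3*x1^+2*x2^+2*y2*r^+2*w^+3 + 3*x1^+2*x2^+2*y2*r^+3*w - x1^+2*x2^+3*y2*r^+2*w + 2*x1^+2*x2^+4*y2*r*w + 3*x1^+2*y1*r^+4*w^+3 - 7*x1^+2*y1*r^+5*w - x1^+2*y1*y2^+2*r*w^+3 + 4*x1^+2*y1*y2^+2*r^+2*w - x1^+2*y1*x2*r^+3*w^+3 + 8*x1^+2*y1*x2*r^+4*w + x1^+2*y1*x2*y2^+2*w^+3 + 4*x1^+2*y1*x2*y2^+2*r*w - 5*x1^+2*y1*x2^+2*r^+2*w^+3 - 2*x1^+2*y1*x2^+2*r^+3*w + 3*x1^+2*y1*x2^+3*r*w^+3 + 2*x1^+2*y1*x2^+3*r^+2*w - 3*x1^+2*y1*x2^+4*r*w + 2*x1^+2*y1*x2^+5*w + 3*x1^+3*y2*r^+3*w^+3 - 7*x1^+3*y2*r^+4*w + x1^+3*y2^+3*r*w - 11*x1^+3*x2*y2*r^+3*w + x1^+3*x2*y2^+3*w - 3*x1^+3*x2^+2*y2*r*w^+3 + 5*x1^+3*x2^+2*y2*r^+2*w - 7*x1^+3*x2^+3*y2*r*w - 3*x1^+3*y1*r^+3*w^+3 + 3*x1^+3*y1*r^+4*w - 4*x1^+3*y1*y2^+2*r*w + 5*x1^+3*y1*x2*r^+2*w^+3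 - 2*x1^+3*y1*x2*r^+3*w - 4*x1^+3*y1*x2*y2^+2*w + x1^+3*y1*x2^+2*r*w^+3 - 6*x1^+3*y1*x2^+2*r^+2*w - 3*x1^+3*y1*x2^+3*w^+3 + 6*x1^+3*y1*x2^+3*r*w - x1^+3*y1*x2^+4*w - 3*x1^+4*y2*r^+2*w^+3 + 13*x1^+4*y2*r^+3*w + 3*x1^+4*x2*y2*r^+2*w + 3*x1^+4*x2^+2*y2*w^+3 + 3*x1^+4*x2^+2*y2*r*w - 3*x1^+4*x2^+3*y2*w + x1^+4*y1*r^+2*w^+3 - 5*x1^+4*y1*r^+3*w - 3*x1^+4*y1*x2*r*w^+3 + 7*x1^+4*y1*x2*r^+2*w + 2*x1^+4*y1*x2^+2*w^+3 - x1^+4*y1*x2^+2*r*w + 3*x1^+4*y1*x2^+3*w + 3*x1^+5*y2*r*w^+3 - 4*x1^+5*y2*r^+2*w - 3*x1^+5*x2*y2*w^+3 - 2*x1^+5*x2*y2*r*w + 2*x1^+5*x2^+2*y2*w - x1^+5*y1*r*w^+3 + x1^+5*y1*x2*w^+3 - 4*x1^+5*y1*x2*r*w - 4*x1^+5*y1*x2^+2*w + 4*x1^+6*y2*r*w + 4*x1^+6*x2*y2*w)) * (y2 ^+ 2 - (x2 ^+ 3 + r ^+ 2 * x2))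
  + ((- y1*x2^+3*r^+6*w + y1*x2^+4*r^+5*w - y1*x2^+5*r^+4*w + y1*x2^+6*r^+3*w + 3*x1*x2^+2*y2*r^+6*w - 3*x1*x2^+3*y2*r^+5*w + x1*x2^+4*y2*r^+4*w - x1*x2^+5*y2*r^+3*w - 2*x1*y1*x2^+2*r^+6*w + 3*x1*y1*x2^+3*r^+5*w - 3*x1*y1*x2^+4*r^+4*w + 3*x1*y1*x2^+5*r^+3*w - x1*y1*x2^+6*r^+2*w - 2*x1^+2*x2*y2*r^+6*w - x1^+2*x2^+2*y2*r^+5*w + 5*x1^+2*x2^+3*y2*r^+4*w - 3*x1^+2*x2^+4*y2*r^+3*w + x1^+2*x2^+5*y2*r^+2*w + 3*x1^+2*y1*x2*r^+6*w - x1^+2*y1*x2^+2*r^+5*w - 2*x1^+2*y1*x2^+3*r^+4*w + 2*x1^+2*y1*x2^+4*r^+3*w - 5*x1^+2*y1*x2^+5*r^+2*w + 3*x1^+2*y1*x2^+6*r*w - x1^+3*y2*r^+6*w + 3*x1^+3*x2*y2*r^+5*w - 2*x1^+3*x2^+2*y2*r^+4*w - 2*x1^+3*x2^+3*y2*r^+3*w + 3*x1^+3*x2^+4*y2*r^+2*w - x1^+3*x2^+5*y2*r*w - 3*x1^+3*y1*x2*r^+5*w + 5*x1^+3*y1*x2^+2*r^+4*w - 2*x1^+3*y1*x2^+3*r^+3*w + 2*x1^+3*y1*x2^+4*r^+2*w + x1^+3*y1*x2^+5*r*w - 3*x1^+3*y1*x2^+6*w + x1^+4*y2*r^+5*w -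 3*x1^+4*x2*y2*r^+4*w + 2*x1^+4*x2^+2*y2*r^+3*w + 2*x1^+4*x2^+3*y2*r^+2*w - 3*x1^+4*x2^+4*y2*r*w + x1^+4*x2^+5*y2*w + x1^+4*y1*x2*r^+4*w - 3*x1^+4*y1*x2^+2*r^+3*w + 3*x1^+4*y1*x2^+3*r^+2*w - 3*x1^+4*y1*x2^+4*r*w + 2*x1^+4*y1*x2^+5*w - x1^+5*y2*r^+4*w + 3*x1^+5*x2*y2*r^+3*w - 5*x1^+5*x2^+2*y2*r^+2*w + x1^+5*x2^+3*y2*r*w + 2*x1^+5*x2^+4*y2*w - x1^+5*y1*x2*r^+3*w + x1^+5*y1*x2^+2*r^+2*w - x1^+5*y1*x2^+3*r*w + x1^+5*y1*x2^+4*w + x1^+6*y2*r^+3*w - x1^+6*x2*y2*r^+2*w + 3*x1^+6*x2^+2*y2*r*w - 3*x1^+6*x2^+3*y2*w)) * (w ^+ 2 - (2 * r))).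
Qed.

Lemma to_edwards_chord_y (r w x1 y1 x2 y2 l x3 X1 Y1 X2 Y2 Y3 U : F) :
  y1 ^+ 2 = x1 ^+ 3 + r ^+ 2 * x1 -> y2 ^+ 2 = x2 ^+ 3 + r ^+ 2 * x2 ->
  w ^+ 2 = 2 * r ->
  l * (x2 - x1) = y2 - y1 -> x3 = l ^+ 2 - x1 - x2 ->
  X1 * (x1 ^+ 2 + r ^+ 2) = w * y1 -> Y1 * (x1 + r) = x1 - r ->
  X2 * (x2 ^+ 2 + r ^+ 2) = w * y2 -> Y2 * (x2 + r) = x2 - r ->
  Y3 * (x3 + r) = x3 - r ->
  U * (1 + X1 * X2 * Y1 * Y2) = Y1 * Y2 - X1 * X2 ->
  x1 ^+ 2 + r ^+ 2 != 0 -> x1 + r != 0 -> x2 ^+ 2 + r ^+ 2 != 0 -> x2 + r != 0 ->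
  x3 + r != 0 -> x2 - x1 != 0 -> 1 + X1 * X2 * Y1 * Y2 != 0 ->
  U = Y3.
Proof.
certificate
  ((1 + X1 * X2 * Y1 * Y2) * (x3 + r) * (x1 ^+ 2 + r ^+ 2) * (x1 + r) * (x2 ^+ 2 + r ^+ 2) * (x2 + r) * (x2 - x1) ^+ 2)
  (((x3 + r) * (x1 ^+ 2 + r ^+ 2) * (x1 + r) * (x2 ^+ 2 + r ^+ 2) * (x2 + r) * (x2 - x1) ^+ 2) * ((U * (1 + X1 * X2 * Y1 * Y2)) - (Y1 * Y2 - X1 * X2))
  + ((x1 ^+ 2 + r ^+ 2) * (x1 + r) * (x2 ^+ 2 + r ^+ 2) * (x2 + r) * (x2 - x1) ^+ 2 * (- 1 - X1*Y1*X2*Y2)) * ((Y3 * (x3 + r)) - (x3 - r))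
  + ((x1 ^+ 2 + r ^+ 2) * (x1 + r) * (x2 ^+ 2 + r ^+ 2) * (x2 + r) * (x2 - x1) ^+ 2 * (- 1 + Y1*Y2 - X1*X2 - X1*Y1*X2*Y2)) * (x3 - ((l ^+ 2 - x1) - x2))
  + ((x1 + r) * (x2 ^+ 2 + r ^+ 2) * (x2 + r) * (x2 - x1) ^+ 2 * (- l^+2*X2 - l^+2*Y1*X2*Y2 - r*X2 + r*Y1*X2*Y2 + x2*X2 + x2*Y1*X2*Y2 + x1*X2 + x1*Y1*X2*Y2)) * ((X1 * (x1 ^+ 2 + r ^+ 2)) - w * y1)
  + ((x2 ^+ 2 + r ^+ 2) * (x2 + r) * (x2 - x1) ^+ 2 * (r^+2*l^+2*Y2 + r^+3*Y2 - x2*r^+2*Y2 - y1*w*l^+2*X2*Y2 + y1*r*w*X2*Y2 + y1*x2*w*X2*Y2 - x1*r^+2*Y2 + x1*y1*w*X2*Y2 + x1^+2*l^+2*Y2 + x1^+2*r*Y2 - x1^+2*x2*Y2 - x1^+3*Y2)) * ((Y1 * (x1 + r)) - (x1 - r))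
  + ((x2 + r) * (x2 - x1) ^+ 2 * (- y1*r*w*l^+2 + y1*r*w*l^+2*Y2 - y1*r^+2*w - y1*r^+2*w*Y2 + y1*x2*r*w - y1*x2*r*w*Y2 - x1*y1*w*l^+2 - x1*y1*w*l^+2*Y2 + x1*y1*x2*w + x1*y1*x2*w*Y2 + x1^+2*y1*w + x1^+2*y1*w*Y2)) * ((X2 * (x2 ^+ 2 + r ^+ 2)) - w * y2)
  + ((x2 - x1) ^+ 2 * (- r^+5*l^+2 - r^+6 + x2*r^+5 - x2^+2*r^+3*l^+2 - x2^+2*r^+4 + x2^+3*r^+3 + y1*y2*r*w^+2*l^+2 - y1*y2*r^+2*w^+2 - y1*x2*y2*r*w^+2 + x1*r^+4*l^+2 + 2*x1*r^+5 - x1*x2*r^+4 + x1*x2^+2*r^+2*l^+2 + 2*x1*x2^+2*r^+3 - x1*x2^+3*r^+2 - x1*y1*y2*w^+2*l^+2 + x1*y1*x2*y2*w^+2 - x1^+2*r^+3*l^+2 - 2*x1^+2*r^+4 + x1^+2*x2*r^+3 - x1^+2*x2^+2*r*l^+2 - 2*x1^+2*x2^+2*r^+2 + x1^+2*x2^+3*r + x1^+2*y1*y2*w^+2 + x1^+3*r^+2*l^+2 + 2*x1^+3*r^+3 - x1^+3*x2*r^+2 + x1^+3*x2^+2*l^+2 + 2*x1^+3*x2^+2*r - x1^+3*x2^+3 - x1^+4*r^+2 - x1^+4*x2^+2)) * ((Y2 * (x2 + r)) - (x2 - r))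
  + ((- 2*x2*y2*r^+5 - 2*x2^+2*r^+5*l - 2*x2^+3*y2*r^+3 - 2*x2^+4*r^+3*l - 2*y1*y2^+2*r^+2*w^+2 + 2*y1*x2*r^+5 - 2*y1*x2*y2*r^+2*w^+2*l + 2*y1*x2^+3*r^+3 + 2*y1^+2*y2*r^+2*w^+2 - 2*x1*y2*r^+5 - 2*x1*x2^+2*y2*r^+3 + 2*x1*y1*r^+5 + 2*x1*y1*y2*r^+2*w^+2*l - 2*x1*y1*x2*y2^+2*w^+2 + 2*x1*y1*x2^+2*r^+3 - 2*x1*y1*x2^+2*y2*w^+2*l + 2*x1*y1^+2*x2*y2*w^+2 + 2*x1^+2*r^+5*l - 2*x1^+2*x2*y2*r^+3 - 2*x1^+2*x2^+3*y2*r - 2*x1^+2*x2^+4*r*l + 2*x1^+2*y1*x2*r^+3 + 2*x1^+2*y1*x2*y2*w^+2*l + 2*x1^+2*y1*x2^+3*r - 2*x1^+3*y2*r^+3 - 2*x1^+3*x2^+2*y2*r + 2*x1^+3*y1*r^+3 + 2*x1^+3*y1*x2^+2*r + 2*x1^+4*r^+3*l + 2*x1^+4*x2^+2*r*l)) * ((l * (x2 - x1)) - (y2 - y1))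
  + ((4*y2^+2*r^+2*w^+2 - 2*x2*r^+5 - 2*x2^+3*r^+3 - 2*y1*y2*r^+2*w^+2 - 2*x1*r^+5 + 4*x1*x2*y2^+2*w^+2 - 2*x1*x2^+2*r^+3 - 2*x1*y1*x2*y2*w^+2 - 2*x1^+2*x2*r^+3 - 2*x1^+2*x2^+3*r - 2*x1^+3*r^+3 - 2*x1^+3*x2^+2*r)) * (y1 ^+ 2 - (x1 ^+ 3 + r ^+ 2 * x1))
  + ((- 2*x2*r^+5 - 2*x2^+3*r^+3 - 2*y1*y2*r^+2*w^+2 + 4*x1*r^+4*w^+2 - 2*x1*r^+5 - 2*x1*x2^+2*r^+3 - 2*x1*y1*x2*y2*w^+2 + 4*x1^+2*x2*r^+2*w^+2 - 2*x1^+2*x2*r^+3 - 2*x1^+2*x2^+3*r + 4*x1^+3*r^+2*w^+2 - 2*x1^+3*r^+3 - 2*x1^+3*x2^+2*r + 4*x1^+4*x2*w^+2)) * (y2 ^+ 2 - (x2 ^+ 3 + r ^+ 2 * x2))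
  + ((- 2*y1*x2*y2*r^+4 - 2*y1*x2^+3*y2*r^+2 + 4*x1*x2*r^+6 + 4*x1*x2^+3*r^+4 - 2*x1*y1*y2*r^+4 - 2*x1*y1*x2^+2*y2*r^+2 + 4*x1^+2*x2^+2*r^+4 + 4*x1^+2*x2^+4*r^+2 - 2*x1^+2*y1*x2*y2*r^+2 - 2*x1^+2*y1*x2^+3*y2 + 4*x1^+3*x2*r^+4 + 4*x1^+3*x2^+3*r^+2 - 2*x1^+3*y1*y2*r^+2 - 2*x1^+3*y1*x2^+2*y2 + 4*x1^+4*x2^+2*r^+2 + 4*x1^+4*x2^+4)) * (w ^+ 2 - (2 * r))).
Qed.

Lemma to_edwards_tangent_x (r w x1 y1 l x3 y3 X1 Y1 X3 U : F) :
  y1 ^+ 2 = x1 ^+ 3 + r ^+ 2 * x1 -> w ^+ 2 = 2 * r ->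
  l * (2 * y1) = 3 * x1 ^+ 2 + r ^+ 2 -> x3 = l ^+ 2 - x1 - x1 ->
  y3 = l * (x1 - x3) - y1 ->
  X1 * (x1 ^+ 2 + r ^+ 2) = w * y1 -> Y1 * (x1 + r) = x1 - r ->
  X3 * (x3 ^+ 2 + r ^+ 2) = w * y3 ->
  U * (1 - X1 * X1 * Y1 * Y1) = X1 * Y1 + Y1 * X1 ->
  x1 ^+ 2 + r ^+ 2 != 0 -> x1 + r != 0 -> x3 ^+ 2 + r ^+ 2 != 0 ->
  2 * y1 != 0 -> 1 - X1 * X1 * Y1 * Y1 != 0 ->
  U = X3.
Proof.
certificate
  ((1 - X1 * X1 * Y1 * Y1) * (x3 ^+ 2 + r ^+ 2) * (x1 ^+ 2 + r ^+ 2) ^+ 2 * (x1 + r) ^+ 2 * (2 * y1) ^+ 4)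
  (((x3 ^+ 2 + r ^+ 2) * (x1 ^+ 2 + r ^+ 2) ^+ 2 * (x1 + r) ^+ 2 * (2 * y1) ^+ 4) * ((U * (1 - X1 * X1 * Y1 * Y1)) - (X1 * Y1 + Y1 * X1))
  + ((x1 ^+ 2 + r ^+ 2) ^+ 2 * (x1 + r) ^+ 2 * (2 * y1) ^+ 4 * (- 1 + X1^+2*Y1^+2)) * ((X3 * (x3 ^+ 2 + r ^+ 2)) - w * y3)
  + ((x1 ^+ 2 + r ^+ 2) ^+ 2 * (x1 + r) ^+ 2 * (2 * y1) ^+ 4 * (- w + w*X1^+2*Y1^+2)) * (y3 - ((l * (x1 - x3)) - y1))
  + ((x1 ^+ 2 + r ^+ 2) ^+ 2 * (x1 + r) ^+ 2 * (2 * y1) ^+ 4 * (2*x3*X1*Y1 + 2*l^+2*X1*Y1 + w*l - w*l*X1^+2*Y1^+2 - 4*x1*X1*Y1)) * (x3 - ((l ^+ 2 - x1) - x1))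
  + ((x1 + r) ^+ 2 * (2 * y1) ^+ 4 * (2*r^+2*l^+4*Y1 - r^+2*w*l^+3*X1*Y1^+2 + 2*r^+4*Y1 - y1*w^+2*l^+3*Y1^+2 - y1*r^+2*w*X1*Y1^+2 - y1^+2*w^+2*Y1^+2 - 8*x1*r^+2*l^+2*Y1 + 3*x1*r^+2*w*l*X1*Y1^+2 + 3*x1*y1*w^+2*l*Y1^+2 + 2*x1^+2*l^+4*Y1 - x1^+2*w*l^+3*X1*Y1^+2 + 10*x1^+2*r^+2*Y1 - x1^+2*y1*w*X1*Y1^+2 - 8*x1^+3*l^+2*Y1 + 3*x1^+3*w*l*X1*Y1^+2 + 8*x1^+4*Y1)) * ((X1 * (x1 ^+ 2 + r ^+ 2)) - w * y1)
  + ((2 * y1) ^+ 4 * (2*y1*r^+3*w*l^+4 + 2*y1*r^+5*w + y1^+2*r*w^+3*l^+3 - y1^+2*r*w^+3*l^+3*Y1 + y1^+3*r*w^+3 - y1^+3*r*w^+3*Y1 + 2*x1*y1*r^+2*w*l^+4 - 8*x1*y1*r^+3*w*l^+2 + 2*x1*y1*r^+4*w - x1*y1^+2*w^+3*l^+3 - x1*y1^+2*w^+3*l^+3*Y1 - 3*x1*y1^+2*r*w^+3*l + 3*x1*y1^+2*r*w^+3*l*Y1 - x1*y1^+3*w^+3 - x1*y1^+3*w^+3*Y1 + 2*x1^+2*y1*r*w*l^+4 - 8*x1^+2*y1*r^+2*w*l^+2 + 10*x1^+2*y1*r^+3*w + 3*x1^+2*y1^+2*w^+3*l + 3*x1^+2*y1^+2*w^+3*l*Y1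 + 2*x1^+3*y1*w*l^+4 - 8*x1^+3*y1*r*w*l^+2 + 10*x1^+3*y1*r^+2*w - 8*x1^+4*y1*w*l^+2 + 8*x1^+4*y1*r*w + 8*x1^+5*y1*w)) * ((Y1 * (x1 + r)) - (x1 - r))
  + ((- 2*y1^+3*r^+6*w^+3 - 16*y1^+4*r^+4*w*l^+3 - 4*y1^+4*r^+4*w^+3*l - 8*y1^+5*r^+2*w^+3*l^+2 + 4*x1*y1*r^+9*w + 8*x1*y1^+2*r^+7*w*l + 16*x1*y1^+3*r^+5*w*l^+2 + 4*x1*y1^+3*r^+5*w^+3 + 8*x1*y1^+3*r^+6*w + 8*x1*y1^+4*r^+3*w^+3*l + 64*x1*y1^+4*r^+4*w*l + 16*x1*y1^+5*r*w^+3*l^+2 + 24*x1*y1^+5*r^+2*w^+3 - 14*x1^+2*y1^+3*r^+4*w^+3 - 48*x1^+2*y1^+3*r^+5*w - 16*x1^+2*y1^+4*r^+2*w^+3*l - 8*x1^+2*y1^+5*w^+3*l^+2 - 48*x1^+2*y1^+5*r*w^+3 + 32*x1^+3*y1*r^+7*w + 40*x1^+3*y1^+2*r^+5*w*l + 32*x1^+3*y1^+3*r^+3*w*l^+2 + 24*x1^+3*y1^+3*r^+3*w^+3 + 24*x1^+3*y1^+3*r^+4*w + 24*x1^+3*y1^+4*r*w^+3*l + 24*x1^+3*y1^+5*w^+3 + 8*x1^+4*y1*r^+6*w + 16*x1^+4*y1^+2*r^+4*w*l + 32*x1^+4*y1^+3*r^+2*w*l^+2 - 30*x1^+4*y1^+3*r^+2*w^+3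 - 96*x1^+4*y1^+3*r^+3*w + 16*x1^+4*y1^+4*w*l^+3 - 12*x1^+4*y1^+4*w^+3*l + 88*x1^+5*y1*r^+5*w + 56*x1^+5*y1^+2*r^+3*w*l + 16*x1^+5*y1^+3*r*w*l^+2 + 36*x1^+5*y1^+3*r*w^+3 - 104*x1^+5*y1^+3*r^+2*w - 64*x1^+5*y1^+4*w*l + 56*x1^+6*y1*r^+4*w + 64*x1^+6*y1^+2*r^+2*w*l + 32*x1^+6*y1^+3*w*l^+2 - 18*x1^+6*y1^+3*w^+3 - 48*x1^+6*y1^+3*r*w + 96*x1^+7*y1*r^+3*w + 24*x1^+7*y1^+2*r*w*l - 120*x1^+7*y1^+3*w + 120*x1^+8*y1*r^+2*w + 48*x1^+8*y1^+2*w*l + 36*x1^+9*y1*r*w + 72*x1^+10*y1*w)) * ((l * (2 * y1)) - ((3 * x1 ^+ 2) + r ^+ 2))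
  + ((- 2*y1*r^+8*w^+3 - 16*y1^+3*r^+6*w - 16*y1^+5*r^+2*w^+3 + 4*x1*y1*r^+7*w^+3 - 8*x1*y1*r^+8*w + 8*x1*y1^+3*r^+4*w^+3 + 32*x1*y1^+3*r^+5*w + 32*x1*y1^+5*r*w^+3 - 12*x1^+2*y1*r^+6*w^+3 - 16*x1^+2*y1*r^+7*w - 16*x1^+2*y1^+3*r^+3*w^+3 - 80*x1^+2*y1^+3*r^+4*w - 16*x1^+2*y1^+5*w^+3 + 20*x1^+3*y1*r^+5*w^+3 - 48*x1^+3*y1*r^+6*w + 64*x1^+3*y1^+3*r^+2*w^+3 + 64*x1^+3*y1^+3*r^+3*w - 144*x1^+4*y1*r^+5*w - 112*x1^+4*y1^+3*r*w^+3 + 80*x1^+4*y1^+3*r^+2*w - 20*x1^+5*y1*r^+3*w^+3 - 32*x1^+5*y1*r^+4*w + 56*x1^+5*y1^+3*w^+3 + 32*x1^+5*y1^+3*r*w + 12*x1^+6*y1*r^+2*w^+3 - 240*x1^+6*y1*r^+3*w + 144*x1^+6*y1^+3*w - 4*x1^+7*y1*r*w^+3 - 208*x1^+7*y1*r^+2*w + 2*x1^+8*y1*w^+3 - 112*x1^+8*y1*r*w - 216*x1^+9*y1*w)) * (y1 ^+ 2 - (x1 ^+ 3 + r ^+ 2 * x1))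
  + ((- 2*x1*y1*r^+10*w + 4*x1^+2*y1*r^+9*w - 14*x1^+3*y1*r^+8*w + 24*x1^+4*y1*r^+7*w - 12*x1^+5*y1*r^+6*w + 12*x1^+7*y1*r^+4*w - 24*x1^+8*y1*r^+3*w + 14*x1^+9*y1*r^+2*w - 4*x1^+10*y1*r*w + 2*x1^+11*y1*w)) * (w ^+ 2 - (2 * r))).
Qed.

Lemma to_edwards_tangent_y (r w x1 y1 l x3 X1 Y1 Y3 U : F) :
  y1 ^+ 2 = x1 ^+ 3 + r ^+ 2 * x1 -> w ^+ 2 = 2 * r ->
  l * (2 * y1) = 3 * x1 ^+ 2 + r ^+ 2 -> x3 = l ^+ 2 - x1 - x1 ->
  X1 * (x1 ^+ 2 + r ^+ 2) = w * y1 -> Y1 * (x1 + r) = x1 - r ->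
  Y3 * (x3 + r) = x3 - r ->
  U * (1 + X1 * X1 * Y1 * Y1) = Y1 * Y1 - X1 * X1 ->
  x1 ^+ 2 + r ^+ 2 != 0 -> x1 + r != 0 -> x3 + r != 0 ->
  2 * y1 != 0 -> 1 + X1 * X1 * Y1 * Y1 != 0 ->
  U = Y3.
Proof.
certificate
  ((1 + X1 * X1 * Y1 * Y1) * (x3 + r) * (x1 ^+ 2 + r ^+ 2) ^+ 2 * (x1 + r) ^+ 2 * (2 * y1) ^+ 2)
  (((x3 + r) * (x1 ^+ 2 + r ^+ 2) ^+ 2 * (x1 + r) ^+ 2 * (2 * y1) ^+ 2) * ((U * (1 + X1 * X1 * Y1 * Y1)) - (Y1 * Y1 - X1 * X1))
  + ((x1 ^+ 2 + r ^+ 2) ^+ 2 * (x1 + r) ^+ 2 * (2 * y1) ^+ 2 * (- 1 - X1^+2*Y1^+2)) * ((Y3 * (x3 + r)) - (x3 - r))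
  + ((x1 ^+ 2 + r ^+ 2) ^+ 2 * (x1 + r) ^+ 2 * (2 * y1) ^+ 2 * (- 1 + Y1^+2 - X1^+2 - X1^+2*Y1^+2)) * (x3 - ((l ^+ 2 - x1) - x1))
  + ((x1 + r) ^+ 2 * (2 * y1) ^+ 2 * (- r^+2*l^+2*X1 - r^+2*l^+2*X1*Y1^+2 - r^+3*X1 + r^+3*X1*Y1^+2 - y1*w*l^+2 - y1*w*l^+2*Y1^+2 - y1*r*w + y1*r*w*Y1^+2 + 2*x1*r^+2*X1 + 2*x1*r^+2*X1*Y1^+2 + 2*x1*y1*w + 2*x1*y1*w*Y1^+2 - x1^+2*l^+2*X1 - x1^+2*l^+2*X1*Y1^+2 - x1^+2*r*X1 + x1^+2*r*X1*Y1^+2 + 2*x1^+3*X1 + 2*x1^+3*X1*Y1^+2)) * ((X1 * (x1 ^+ 2 + r ^+ 2)) - w * y1)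
  + ((2 * y1) ^+ 2 * (- r^+5*l^+2 + r^+5*l^+2*Y1 - r^+6 + r^+6*Y1 + y1^+2*r*w^+2*l^+2 - y1^+2*r*w^+2*l^+2*Y1 - y1^+2*r^+2*w^+2 + y1^+2*r^+2*w^+2*Y1 + x1*r^+4*l^+2 + x1*r^+4*l^+2*Y1 + 3*x1*r^+5 - x1*r^+5*Y1 - x1*y1^+2*w^+2*l^+2 - x1*y1^+2*w^+2*l^+2*Y1 - x1*y1^+2*r*w^+2 + 3*x1*y1^+2*r*w^+2*Y1 - 2*x1^+2*r^+3*l^+2 + 2*x1^+2*r^+3*l^+2*Y1 - 4*x1^+2*r^+4 + 2*x1^+2*y1^+2*w^+2 + 2*x1^+2*y1^+2*w^+2*Y1 + 2*x1^+3*r^+2*l^+2 + 2*x1^+3*r^+2*l^+2*Y1 + 6*x1^+3*r^+3 - 2*x1^+3*r^+3*Y1 - x1^+4*r*l^+2 + x1^+4*r*l^+2*Y1 - 5*x1^+4*r^+2 - 3*x1^+4*r^+2*Y1 + x1^+5*l^+2 + x1^+5*l^+2*Y1 + 3*x1^+5*r - x1^+5*r*Y1 - 2*x1^+6 - 2*x1^+6*Y1)) * ((Y1 * (x1 + r)) - (x1 - r))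
  + ((- 2*y1^+2*r^+4*w^+2 - 4*y1^+3*r^+2*w^+2*l - 4*x1*r^+7 - 8*x1*y1*r^+5*l - 8*x1^+2*y1^+2*r^+2*w^+2 - 4*x1^+2*y1^+3*w^+2*l - 20*x1^+3*r^+5 - 16*x1^+3*y1*r^+3*l - 6*x1^+4*y1^+2*w^+2 - 28*x1^+5*r^+3 - 8*x1^+5*y1*r*l - 12*x1^+7*r)) * ((l * (2 * y1)) - ((3 * x1 ^+ 2) + r ^+ 2))
  + ((- 2*r^+6*w^+2 + 8*r^+7 - 14*x1^+2*r^+4*w^+2 + 56*x1^+2*r^+5 + 16*x1^+3*y1^+2*w^+2 - 14*x1^+4*r^+2*w^+2 + 88*x1^+4*r^+3 - 2*x1^+6*w^+2 + 40*x1^+6*r)) * (y1 ^+ 2 - (x1 ^+ 3 + r ^+ 2 * x1))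
  + ((- 2*x1*r^+8 - 16*x1^+3*r^+6 - 28*x1^+5*r^+4 - 16*x1^+7*r^+2 - 2*x1^+9)) * (w ^+ 2 - (2 * r))).
Qed.
End PolynomialCertificates.

Definition edwards_on (F : fieldType) (P : F * F) : bool :=
  P.1 ^+ 2 + P.2 ^+ 2 == 1 - P.1 ^+ 2 * P.2 ^+ 2.

Definition edwards_add (F : fieldType) (P Q : F * F) : F * F :=
  ((P.1 * Q.2 + P.2 * Q.1) / (1 - P.1 * Q.1 * P.2 * Q.2),
   (P.2 * Q.2 - P.1 * Q.1) / (1 + P.1 * Q.1 * P.2 * Q.2)).

Lemma edwards_add0 (F : fieldType) (P : F * F) : edwards_add (0, 1) P = P.
Proof.
by case: P => x y; rewrite /edwards_add /= !(mul0r, mul1r, add0r, subr0, addr0, divr1).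
Qed.

Lemma edwards_addC (F : fieldType) (P Q : F * F) : edwards_add P Q = edwards_add Q P.
Proof. by rewrite /edwards_add; congr pair; congr (_ / _); ring. Qed.

Section NoSqrtNeg1.
Variable F : fieldType.
Hypothesis sqr_neq_N1 : forall i : F, i ^+ 2 != - 1.

Lemma two_neq0 : 2 != 0 :> F.
Proof. by move: (sqr_neq_N1 1); rewrite expr1n -addr_eq0. Qed.

Lemma add1r_sqr_neq0 (y : F) : 1 + y ^+ 2 != 0.
Proof. by apply: contra (sqr_neq_N1 y); rewrite addrC addr_eq0. Qed.

Lemma sqr_add_eq0 (a b : F) : a ^+ 2 + b ^+ 2 = 0 -> a = 0 /\ b = 0.
Proof.
move=> ab0; have b0 : b = 0.
  apply/eqP; apply: contraT => b_neq0; have := sqr_neq_N1 (a / b).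
  rewrite expr_div_n (_ : a ^+ 2 = - b ^+ 2); last by apply/eqP; rewrite -addr_eq0 ab0.
  by rewrite mulNr divff ?expf_neq0 ?eqxx.
by split=> //; move/eqP: ab0; rewrite b0 expr0n addr0 expf_eq0 => /andP[_ /eqP].
Qed.

(* If e = x1 x2 y1 y2 had e^2 = 1, the curve equations would make
   (x1 - s e y1)^2 + (x1 y1 (x2 + s y2))^2 vanish for s = 1 and s = -1. *)
Lemma edwards_add_denom_neq0 (x1 y1 x2 y2 : F) :
  edwards_on (x1, y1) -> edwards_on (x2, y2) ->
  1 - x1 * x2 * y1 * y2 != 0 /\ 1 + x1 * x2 * y1 * y2 != 0.
Proof.
rewrite /edwards_on /= => /eqP c1 /eqP c2; set e := x1 * x2 * y1 * y2.
suff e2_neq1 : e ^+ 2 != 1.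
  have : (1 - e) * (1 + e) != 0.
    by rewrite (_ : _ * _ = 1 - e ^+ 2); [rewrite subr_eq0 eq_sym | ring].
  by rewrite mulf_eq0 negb_or => /andP.
apply/negP => /eqP e2.
have vanish (s : F) : s ^+ 2 = 1 -> x1 * y1 * (x2 + s * y2) = 0.
  move=> s2; suff /sqr_add_eq0[_ //] :
    (x1 - s * e * y1) ^+ 2 + (x1 * y1 * (x2 + s * y2)) ^+ 2 = 0.
  transitivity ((x1 ^+ 2 + y1 ^+ 2 - (1 - x1 ^+ 2 * y1 ^+ 2))
      + x1 ^+ 2 * y1 ^+ 2 * (x2 ^+ 2 + y2 ^+ 2 - (1 - x2 ^+ 2 * y2 ^+ 2))
      + (e ^+ 2 - 1) * (y1 ^+ 2 - 1)
      + (s ^+ 2 - 1) * (e ^+ 2 * y1 ^+ 2 + x1 ^+ 2 * y1 ^+ 2 * y2 ^+ 2)).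
    by rewrite /e; ring.
  by rewrite c1 c2 e2 s2 !subrr !(mul0r, mulr0, addr0).
have /andP[x1y1_neq0 x2y2_neq0] : (x1 * y1 != 0) && (x2 * y2 != 0).
  rewrite -negb_or -mulf_eq0 (_ : x1 * y1 * (x2 * y2) = e); last by rewrite /e; ring.
  by apply: contra_eq_neq e2 => ->; rewrite expr0n eq_sym oner_neq0.
have sum0 : x2 + y2 = 0.
  by move/eqP: (vanish 1 (expr1n _ _)); rewrite mul1r mulf_eq0 (negbTE x1y1_neq0) => /eqP.
have dif0 : x2 - y2 = 0.
  have /eqP := vanish (-1) (etrans (sqrrN 1) (expr1n _ _)).
  by rewrite mulN1r mulf_eq0 (negbTE x1y1_neq0) => /eqP.
have : 2 * x2 = (x2 + y2) + (x2 - y2) by ring.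
rewrite sum0 dif0 addr0 => /eqP; rewrite mulf_eq0 (negbTE two_neq0) /= => /eqP x2_0.
by move: x2y2_neq0; rewrite x2_0 mul0r eqxx.
Qed.

Lemma edwards_addA (P1 P2 P3 : F * F) :
  edwards_on P1 -> edwards_on P2 -> edwards_on P3 ->
  edwards_on (edwards_add P1 P2) -> edwards_on (edwards_add P2 P3) ->
  edwards_add (edwards_add P1 P2) P3 = edwards_add P1 (edwards_add P2 P3).
Proof.
case: P1 P2 P3 => [x1 y1] [x2 y2] [x3 y3] o1 o2 o3.
have [d12 d12'] := edwards_add_denom_neq0 o1 o2.
have [d23 d23'] := edwards_add_denom_neq0 o2 o3.
case E12 : (edwards_add (x1, y1) (x2, y2)) => [X12 Y12] o12.
case E23 : (edwards_add (x2, y2) (x3, y3)) => [X23 Y23] o23.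
have [d12_3 d12_3'] := edwards_add_denom_neq0 o12 o3.
have [d1_23 d1_23'] := edwards_add_denom_neq0 o1 o23.
case: E12 E23 => eX12 eY12 [eX23 eY23].
move: o1 o2 o3 => /eqP /= c1 /eqP /= c2 /eqP /= c3.
rewrite /edwards_add /=; congr pair.
- apply: (@edwards_assoc_x _ x1 y1 x2 y2 x3 y3 X12 Y12 X23 Y23) => //;
    by rewrite ?divfK // -?eX12 -?eY12 -?eX23 -?eY23 ?divfK ?add1r_sqr_neq0.
- apply: (@edwards_assoc_y _ x1 y1 x2 y2 x3 y3 X12 Y12 X23 Y23) => //;
    by rewrite ?divfK // -?eX12 -?eY12 -?eX23 -?eY23 ?divfK ?add1r_sqr_neq0.
Qed.

Lemma edwards_addN (X Y : F) : edwards_on (X, Y) -> edwards_add (X, Y) (- X, Y) = (0, 1).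
Proof.
move=> o; have [den_neq0 _] := edwards_add_denom_neq0 o o.
move/eqP: o => /= c; rewrite /edwards_add /= !mulrN !mulNr (mulrC Y X) subrr mul0r.
congr pair; rewrite (_ : _ - _ = 1 - X * X * Y * Y) ?divff //.
by transitivity (X ^+ 2 + Y ^+ 2); [ring | rewrite c; ring].
Qed.

End NoSqrtNeg1.

Section Weierstrass.
Variable F : fieldType.
Implicit Types (a x y : F) (P Q : ec_point F).

Lemma on_curve0 a P :
  on_curve a 0 P = if P is Some (x, y) then y ^+ 2 == x ^+ 3 + a * x else true.
Proof. by case: P => [[x y]|] //=; rewrite addr0. Qed.

Lemma double_neq0 y : y != - y -> 2 * y != 0.
Proof. by rewrite mulr_natl mulr2n addr_eq0. Qed.

Lemma on_curve_same_x a x y1 y2 :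
  y1 ^+ 2 = x ^+ 3 + a * x -> y2 ^+ 2 = x ^+ 3 + a * x -> y1 != - y2 -> y1 = y2.
Proof.
move=> e1 e2 y12; have : y1 ^+ 2 == y2 ^+ 2 by rewrite e1 e2.
by rewrite eqf_sqr (negbTE y12) orbF => /eqP.
Qed.

Lemma ec_add_on a P Q : on_curve a 0 P -> on_curve a 0 Q -> on_curve a 0 (ec_add a P Q).
Proof.
case: P Q => [[x1 y1]|] [[x2 y2]|] //; rewrite !on_curve0 /=.
have [<- /eqP e1 /eqP e2 | x12 /eqP e1 /eqP e2] := eqVneq x1 x2.
  have [//|y12] := eqVneq y1 (- y2); have ey := on_curve_same_x e1 e2 y12; subst y2.
  apply/eqP/(tangent_on_curve e1) => //; last exact: double_neq0.
  by rewrite divfK ?double_neq0.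
have x21 : x2 - x1 != 0 by rewrite subr_eq0 eq_sym.
by apply/eqP/(chord_on_curve e1 e2) => //; rewrite divfK.
Qed.

Definition ec_opp P : ec_point F := if P is Some (x, y) then Some (x, - y) else None.

Lemma ec_opp_on a P : on_curve a 0 P -> on_curve a 0 (ec_opp P).
Proof. by case: P => [[x y]|] //=; rewrite sqrrN. Qed.

Lemma ec_addNr a P : ec_add a (ec_opp P) P = None.
Proof. by case: P => [[x y]|] //=; rewrite !eqxx. Qed.

Lemma ec_double_x_sqr a P x' y' :
  on_curve a 0 P -> ec_add a P P = Some (x', y') -> exists s, s ^+ 2 = x'.
Proof.
case: P => [[x y]|] //; rewrite on_curve0 => /eqP e /=; rewrite eqxx.
have [//|/double_neq0 y2_neq0] := eqVneq y (- y); case=> <- _.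
exists ((x ^+ 2 - a) / (2 * y)); rewrite expr_div_n.
by rewrite -(tangent_x_sqr e (divfK y2_neq0 _) erefl y2_neq0) mulfK ?expf_neq0.
Qed.

End Weierstrass.

(* For w^2 = 2 r this maps y^2 = x^3 + r^2 x birationally onto the Edwards curve
   u^2 + v^2 = 1 - u^2 v^2, the point at infinity going to the neutral element (0, 1). *)
Definition to_edwards (F : fieldType) (r w : F) (P : ec_point F) : F * F :=
  if P is Some (x, y) then (w * y / (x ^+ 2 + r ^+ 2), (x - r) / (x + r)) else (0, 1).

Section EdwardsModel.
Variable F : fieldType.
Hypothesis sqr_neq_N1 : forall i : F, i ^+ 2 != - 1.
Variables r w : F.
Hypotheses (r_neq0 : r != 0) (w2 : w ^+ 2 = 2 * r).
Implicit Types (x y : F) (P Q : ec_point F).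

Local Notation E := (on_curve (r ^+ 2) 0).
Local Notation phi := (to_edwards r w).

Lemma two_r_neq0 : 2 * r != 0.
Proof. by rewrite mulf_neq0 ?two_neq0. Qed.

Lemma w_neq0 : w != 0.
Proof. by apply: contra_eq_neq w2 => ->; rewrite expr0n eq_sym two_r_neq0. Qed.

Lemma curve_denoms_neq0 x y :
  y ^+ 2 = x ^+ 3 + r ^+ 2 * x -> x ^+ 2 + r ^+ 2 != 0 /\ x + r != 0.
Proof.
move=> e; split; first by apply: contra r_neq0 => /eqP/(sqr_add_eq0 sqr_neq_N1)[_ ->].
apply: contra w_neq0 => /eqP x_Nr.
have /(sqr_add_eq0 sqr_neq_N1)[_ /eqP] : y ^+ 2 + (w * r) ^+ 2 = 0.
  rewrite e (_ : x = - r) ?exprMn ?w2; first by ring.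
  by apply/subr0_eq; rewrite opprK.
by rewrite mulf_eq0 (negbTE r_neq0) orbF.
Qed.

Lemma to_edwards_on P : E P -> edwards_on (phi P).
Proof.
case: P => [[x y]|]; rewrite on_curve0; last by move=> _; apply/eqP; rewrite /=; ring.
move=> /eqP e; have [d1 d2] := curve_denoms_neq0 e.
by apply/eqP/(to_edwards_on_poly e w2) => //; rewrite divfK.
Qed.

Lemma cayley_neq1 x : x + r != 0 -> (x - r) / (x + r) != 1.
Proof.
move=> d; move: two_r_neq0; apply: contra_neq => e.
have xr : x - r = x + r by rewrite -[x - r](divfK d) e mul1r.
have -> : 2 * r = (x + r) - (x - r) by ring.
by rewrite xr subrr.
Qed.

Lemma cayley_inj x1 x2 : x1 + r != 0 -> x2 + r != 0 ->
  (x1 - r) / (x1 + r) = (x2 - r) / (x2 + r) -> x1 = x2.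
Proof.
move=> d1 d2 /eqP; rewrite eqr_div // => /eqP e; apply/subr0_eq.
apply: (mulfI two_r_neq0); rewrite mulr0.
by transitivity ((x1 - r) * (x2 + r) - (x2 - r) * (x1 + r)); [ring | rewrite e subrr].
Qed.

Lemma to_edwards_inj P Q : E P -> E Q -> phi P = phi Q -> P = Q.
Proof.
case: P Q => [[x1 y1]|] [[x2 y2]|]; rewrite !on_curve0 //.
- move=> /eqP e1 /eqP e2 [eX eY].
  have [d1 d1'] := curve_denoms_neq0 e1; have [d2 d2'] := curve_denoms_neq0 e2.
  have ex := cayley_inj d1' d2' eY; subst x2.
  by move/(divIf d1)/(mulfI w_neq0): eX => ->.
- by move=> /eqP /curve_denoms_neq0 [_ /cayley_neq1/eqP neq] _ [_ /neq].
- by move=> _ /eqP /curve_denoms_neq0 [_ /cayley_neq1/eqP neq] [_ /esym/neq].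
Qed.

Lemma to_edwards_fst x y :
  x ^+ 2 + r ^+ 2 != 0 -> (phi (Some (x, y))).1 * (x ^+ 2 + r ^+ 2) = w * y.
Proof. by move=> d; rewrite /= divfK. Qed.

Lemma to_edwards_snd x y : x + r != 0 -> (phi (Some (x, y))).2 * (x + r) = x - r.
Proof. by move=> d; rewrite /= divfK. Qed.

Lemma to_edwards_chord x1 y1 x2 y2 :
  y1 ^+ 2 = x1 ^+ 3 + r ^+ 2 * x1 -> y2 ^+ 2 = x2 ^+ 3 + r ^+ 2 * x2 -> x1 != x2 ->
  phi (ec_add (r ^+ 2) (Some (x1, y1)) (Some (x2, y2)))
  = edwards_add (phi (Some (x1, y1))) (phi (Some (x2, y2))).
Proof.
move=> e1 e2 x12; rewrite /ec_add (negbTE x12).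
have x21 : x2 - x1 != 0 by rewrite subr_eq0 eq_sym.
set l := (y2 - y1) / (x2 - x1); have hl : l * (x2 - x1) = y2 - y1 by rewrite divfK.
have e3 := chord_on_curve e1 e2 hl erefl erefl x21.
have [[d1 d1'] [d2 d2']] := (curve_denoms_neq0 e1, curve_denoms_neq0 e2).
have [d3 d3'] := curve_denoms_neq0 e3.
have o1 : edwards_on (phi (Some (x1, y1))) by rewrite to_edwards_on ?on_curve0 ?e1.
have o2 : edwards_on (phi (Some (x2, y2))) by rewrite to_edwards_on ?on_curve0 ?e2.
have [dX dY] := edwards_add_denom_neq0 sqr_neq_N1 o1 o2.
rewrite {1}/to_edwards /edwards_add; congr pair; symmetry.
- apply: (to_edwards_chord_x e1 e2 w2 hl erefl erefl (to_edwards_fst y1 d1)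
    (to_edwards_snd y1 d1') (to_edwards_fst y2 d2) (to_edwards_snd y2 d2')
    (to_edwards_fst _ d3)) => //.
  by rewrite divfK.
- apply: (to_edwards_chord_y e1 e2 w2 hl erefl (to_edwards_fst y1 d1)
    (to_edwards_snd y1 d1') (to_edwards_fst y2 d2) (to_edwards_snd y2 d2')
    (to_edwards_snd _ d3')) => //.
  by rewrite divfK.
Qed.

Lemma to_edwards_tangent x y : y ^+ 2 = x ^+ 3 + r ^+ 2 * x -> y != - y ->
  phi (ec_add (r ^+ 2) (Some (x, y)) (Some (x, y)))
  = edwards_add (phi (Some (x, y))) (phi (Some (x, y))).
Proof.
move=> e y_neqN; rewrite /ec_add eqxx (negbTE y_neqN).
have y2_neq0 := double_neq0 y_neqN.
set l := (3%:R * x ^+ 2 + r ^+ 2) / (2%:R * y).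
have hl : l * (2 * y) = 3 * x ^+ 2 + r ^+ 2 by rewrite divfK.
have e3 := tangent_on_curve e hl erefl erefl y2_neq0.
have [d d'] := curve_denoms_neq0 e; have [d3 d3'] := curve_denoms_neq0 e3.
have o : edwards_on (phi (Some (x, y))) by rewrite to_edwards_on ?on_curve0 ?e.
have [dX dY] := edwards_add_denom_neq0 sqr_neq_N1 o o.
rewrite {1}/to_edwards /edwards_add; congr pair; symmetry.
- apply: (to_edwards_tangent_x e w2 hl erefl erefl (to_edwards_fst y d) (to_edwards_snd y d')
    (to_edwards_fst _ d3)) => //.
  by rewrite divfK.
- apply: (to_edwards_tangent_y e w2 hl erefl (to_edwards_fst y d) (to_edwards_snd y d')
    (to_edwards_snd _ d3')) => //.
  by rewrite divfK.
Qed.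

Lemma to_edwards_add P Q :
  E P -> E Q -> phi (ec_add (r ^+ 2) P Q) = edwards_add (phi P) (phi Q).
Proof.
case: P Q => [[x1 y1]|] [[x2 y2]|]; rewrite ?on_curve0; last 3 first.
- by move=> _ _; rewrite edwards_addC edwards_add0.
- by move=> _ _; rewrite edwards_add0.
- by move=> _ _; rewrite edwards_add0.
have [<- /eqP e1 /eqP e2 | x12 /eqP e1 /eqP e2] := eqVneq x1 x2; last exact: to_edwards_chord.
have [y12 | y12] := eqVneq y1 (- y2); last first.
  by have ey := on_curve_same_x e1 e2 y12; subst y2; apply: to_edwards_tangent.
have o2 : edwards_on (phi (Some (x1, y2))) by rewrite to_edwards_on ?on_curve0 ?e2.
by rewrite y12 /ec_add !eqxx /to_edwards mulrN mulNr edwards_addC edwards_addN.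
Qed.

Lemma ec_addA_r2 P Q R : E P -> E Q -> E R ->
  ec_add (r ^+ 2) (ec_add (r ^+ 2) P Q) R = ec_add (r ^+ 2) P (ec_add (r ^+ 2) Q R).
Proof.
move=> oP oQ oR; have [oPQ oQR] := (ec_add_on oP oQ, ec_add_on oQ oR).
apply: to_edwards_inj; rewrite ?ec_add_on // !to_edwards_add //.
by apply: edwards_addA; rewrite // -?to_edwards_add // to_edwards_on.
Qed.

Lemma ec_addC_r2 P Q : E P -> E Q -> ec_add (r ^+ 2) P Q = ec_add (r ^+ 2) Q P.
Proof.
by move=> oP oQ; apply: to_edwards_inj; rewrite ?ec_add_on // !to_edwards_add // edwards_addC.
Qed.

End EdwardsModel.

Definition has_edwards_model (F : fieldType) (a : F) : Prop :=
  (forall i : F, i ^+ 2 != - 1) /\ exists r w : F, [/\ a = r ^+ 2, r != 0 & w ^+ 2 = 2 * r].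

Section EdwardsModelLaws.
Variables (F : fieldType) (a : F).
Hypothesis model : has_edwards_model a.

Lemma ec_addA P Q R : on_curve a 0 P -> on_curve a 0 Q -> on_curve a 0 R ->
  ec_add a (ec_add a P Q) R = ec_add a P (ec_add a Q R).
Proof.
by case: model => sqr_neq_N1 [r [w [-> r_neq0 w2]]]; apply: (ec_addA_r2 sqr_neq_N1 r_neq0 w2).
Qed.

Lemma ec_addC P Q : on_curve a 0 P -> on_curve a 0 Q -> ec_add a P Q = ec_add a Q P.
Proof.
by case: model => sqr_neq_N1 [r [w [-> r_neq0 w2]]]; apply: (ec_addC_r2 sqr_neq_N1 r_neq0 w2).
Qed.

End EdwardsModelLaws.

Definition ec_group (F : finFieldType) (a : F) (_ : has_edwards_model a) :=
  {P : ec_point F | on_curve a 0 P}.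

HB.instance Definition _ (F : finFieldType) (a : F) (model : has_edwards_model a) :=
  Finite.copy (ec_group model) {P : ec_point F | on_curve a 0 P}.

Section CurveGroup.
Variables (F : finFieldType) (a : F) (model : has_edwards_model a).
Local Notation G := (ec_group model).

Definition ec_group_add (P Q : G) : G :=
  exist _ (ec_add a (val P) (val Q)) (ec_add_on (valP P) (valP Q)).
Definition ec_group_opp (P : G) : G := exist _ (ec_opp (val P)) (ec_opp_on (valP P)).
Definition ec_group_zero : G := exist _ None (erefl true).

Lemma ec_group_addA : associative ec_group_add.
Proof. by move=> P Q R; apply/val_inj/esym/(ec_addA model); apply: valP. Qed.

Lemma ec_group_add0 : left_id ec_group_zero ec_group_add.
Proof. by move=> P; apply: val_inj. Qed.

Lemma ec_group_addNr : left_inverse ec_group_zero ec_group_opp ec_group_add.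
Proof. by move=> P; apply/val_inj/ec_addNr. Qed.

End CurveGroup.

HB.instance Definition _ (F : finFieldType) (a : F) (model : has_edwards_model a) :=
  Finite_isGroup.Build (ec_group model)
    (@ec_group_addA F a model) (@ec_group_add0 F a model) (@ec_group_addNr F a model).

Section CurveGroupTheory.
Variables (F : finFieldType) (a : F) (model : has_edwards_model a).
Local Notation G := (ec_group model).

Lemma ec_group_expgE (P : G) k : val (P ^+ k)%g = ec_mul a k (val P).
Proof. by elim: k => [|k IHk]; rewrite ?expg0 // expgS /= IHk. Qed.

Lemma ec_group_abelian : abelian [set: G].
Proof. by apply/centsP => P _ Q _; apply/val_inj/(ec_addC model); apply: valP. Qed.

End CurveGroupTheory.

Section FiniteNoSqrtNeg1.
Variable F : finFieldType.
Hypothesis sqr_neq_N1 : forall i : F, i ^+ 2 != - 1.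

Lemma sqr_or_oppr_sqr (c : F) : (exists d, d ^+ 2 = c) \/ (exists d, d ^+ 2 = - c).
Proof.
have [-> | c_neq0] := eqVneq c 0; first by left; exists 0; rewrite expr0n.
set N := #|F|.-1; have cardF : #|F| = N.+1 by rewrite prednK //; apply/card_gt0P; exists 0.
have unity (x : F) : x != 0 -> x ^+ N = 1.
  by move=> x_neq0; apply: (mulIf x_neq0); rewrite mul1r -exprSr -cardF expf_card.
pose units := enum (predC1 (0 : F)).
have size_units : size units = N by rewrite -cardE cardC1 cardF.
have N_gt0 : (0 < N)%N by rewrite -size_units -has_predT; apply/hasP; exists c; rewrite ?mem_enum.
have /hasP[g _ g_prim] : has N.-primitive_root units.
  apply: has_prim_root; rewrite ?enum_uniq ?size_units //.
  by apply/allP => x; rewrite mem_enum => x_neq0; rewrite unity_rootE unity.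
have even_sqr k : ~~ odd k -> (g ^+ k./2) ^+ 2 = g ^+ k.
  by move=> k_even; rewrite -exprM muln2 -{2}(odd_double_half k) (negbTE k_even).
have [i ci] := prim_rootP g_prim (unity c c_neq0).
have N1_neq0 : (-1 : F) != 0 by rewrite oppr_eq0 oner_eq0.
have [j N1j] := prim_rootP g_prim (unity _ N1_neq0).
have [i_odd | i_even] := boolP (odd i); last by left; exists (g ^+ i./2); rewrite even_sqr.
have [j_odd | j_even] := boolP (odd j); last first.
  by have := sqr_neq_N1 (g ^+ j./2); rewrite even_sqr // -N1j eqxx.
right; exists (g ^+ (i + j)./2).
by rewrite even_sqr ?oddD ?i_odd ?j_odd // exprD -ci -N1j mulrN1.
Qed.

Lemma card_sqrt_sqr (d : F) : d != 0 -> #|[set y : F | y ^+ 2 == d ^+ 2]| = 2%N.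
Proof.
move=> d_neq0; rewrite (_ : [set y | _] = [set d; - d]); last first.
  by apply/setP => y; rewrite !inE eqf_sqr.
by rewrite cards2 -addr_eq0 -mulr2n -mulr_natl mulf_neq0 ?two_neq0.
Qed.

Lemma card_sqrt_oppr_sqr (d : F) : d != 0 -> #|[set y : F | y ^+ 2 == - d ^+ 2]| = 0%N.
Proof.
move=> d_neq0; apply/eqP; rewrite cards_eq0; apply/eqP/setP => y; rewrite !inE.
apply/negbTE; apply: contra (sqr_neq_N1 (y / d)) => /eqP y2.
by rewrite expr_div_n y2 mulNr divff ?expf_neq0.
Qed.

Lemma card_sqrt_add_card_sqrtN (c : F) :
  (#|[set y : F | y ^+ 2 == c]| + #|[set y : F | y ^+ 2 == - c]|)%N = 2%N.
Proof.
have [-> | c_neq0] := eqVneq c 0.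
  by rewrite oppr0 (_ : [set y | _] = [set 0]) ?cards1 //; apply/setP => y; rewrite !inE expf_eq0.
have [[d d2] | [d d2]] := sqr_or_oppr_sqr c.
  have d_neq0 : d != 0 by apply: contra_eq_neq d2 => ->; rewrite expr0n eq_sym.
  by rewrite -d2 card_sqrt_sqr ?card_sqrt_oppr_sqr.
have d_neq0 : d != 0 by apply: contra_eq_neq d2 => ->; rewrite expr0n eq_sym oppr_eq0.
by rewrite -{1}[c]opprK -d2 card_sqrt_sqr ?card_sqrt_oppr_sqr.
Qed.

(* x |-> -x exchanges the fibres above x and -x, whose sizes add up to 2. *)
Lemma card_on_curve0 (a : F) : #|[set P : ec_point F | on_curve a 0 P]| = #|F|.+1.
Proof.
pose f x := x ^+ 3 + a * x; pose B := [set xy : F * F | xy.2 ^+ 2 == f xy.1].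
have -> : [set P | on_curve a 0 P] = None |: (Some @: B).
  apply/setP => -[[x y]|]; rewrite !inE //= mem_imset ?inE ?addr0 //; exact: Some_inj.
rewrite cardsU1 card_imset; last exact: Some_inj.
rewrite (_ : None \notin _); last by apply/imsetP => -[].
congr _.+1; have -> : #|B| = (\sum_x #|[set y : F | y ^+ 2 == f x]|)%N.
  rewrite -sum1dep_card; symmetry; under eq_bigr => x _ do rewrite -sum1dep_card.
  by rewrite pair_big_dep.
set S := (\sum_x _)%N; suff : (S + S = #|F| * 2)%N by lia.
rewrite {2}/S (reindex_inj (@oppr_inj F)) /= -big_split /= -sum_nat_const.
apply: eq_bigr => x _; rewrite (_ : f (- x) = - f x); last by rewrite /f; ring.
exact: card_sqrt_add_card_sqrtN.
Qed.

Lemma has_edwards_model_sqr (a r : F) : r != 0 -> a = r ^+ 2 -> has_edwards_model a.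
Proof.
move=> r_neq0 ->; split=> //.
have [[w w2] | [w w2]] := sqr_or_oppr_sqr (2 * r); first by exists r, w.
by exists (- r), w; rewrite sqrrN oppr_eq0 w2 mulrN.
Qed.

End FiniteNoSqrtNeg1.

Lemma card_ec_group (F : finFieldType) (a : F) (model : has_edwards_model a) :
  #|{: ec_group model}| = #|F|.+1.
Proof. by rewrite -(card_on_curve0 model.1 a) cardsE card_sig. Qed.

Section AbelianGroups.
Local Open Scope group_scope.
Variable gT : finGroupType.
Hypothesis abelianT : abelian [set: gT].

Lemma mem_pcore_abelian (pi : nat_pred) (x : gT) : (x \in 'O_pi([set: gT])) = pi.-elt x.
Proof.
have hall := nilpotent_pcore_Hall pi (abelian_nil abelianT).
by rewrite (mem_normal_Hall hall (pcore_normal _ _)) ?inE.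
Qed.

Lemma abelianT_commute (u v : gT) : commute u v.
Proof. by apply: (centsP abelianT); rewrite inE. Qed.

Lemma abelian_pgroup_cyclic (p : nat) (G : {group gT}) :
  prime p -> p.-group G -> (#|'Ldiv_p(G)| <= p)%N -> cyclic G.
Proof.
move=> p_pr pG small; have abG := abelianS (subsetT G) abelianT.
rewrite (abelian_rank1_cyclic abG) (rank_pgroup pG) (p_rank_abelian p abG).
rewrite (OhmEabelian pG (abelianS (Ohm_sub 1 G) abG)) expn1.
have k_gt0 : (0 < #|'Ldiv_p(G)|)%N by apply/card_gt0P; exists 1; rewrite !inE group1 expg1n eqxx.
rewrite -(leq_exp2l _ _ (prime_gt1 p_pr)) expn1.
exact: leq_trans (dvdn_leq k_gt0 (pfactor_dvdnn _ _)) small.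
Qed.

(* The 2-part of a non-square P must generate the cyclic 2-core: an even power
   g^(2k) times the odd-order 2'-part would be a square. *)
Lemma pcore2_cycle_expg (m n : nat) (P : gT) :
  #|gT| = (m * 2 ^ n)%N -> odd m -> cyclic 'O_2([set: gT]) ->
  (forall g : gT, g * g != P) -> 'O_2([set: gT]) = <[P ^+ m]>.
Proof.
move=> cardT m_odd cycS P_nsq; have [g defS] := cyclicP cycS.
have g_2elt : 2.-elt g by rewrite -mem_pcore_abelian defS cycle_id.
set x := P.`_2; set y := P.`_(2%N^'); have Pxy : P = x * y by rewrite consttC.
have /cycleP[j xj] : x \in <[g]> by rewrite -defS mem_pcore_abelian p_elt_constt.
have y_2'elt : (2%N^').-elt y := p_elt_constt _ P.
have y_odd : odd #[y] by move: y_2'elt; rewrite /p_elt p'natE // dvdn2 negbK.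
clearbody x y.
have j_odd : odd j.
  apply: contraR (P_nsq (g ^+ j./2 * y ^+ (#[y].+1)./2)) => j_even; apply/eqP.
  rewrite -expg2 expgMn; last exact: abelianT_commute.
  have half2 k : ~~ odd k -> k./2.*2 = k.
    by move=> k_even; rewrite -[RHS]odd_double_half (negbTE k_even).
  rewrite -!expgM !muln2 !half2 ?negbK //.
  by rewrite expgS expg_order mulg1 -xj Pxy.
have ym : y ^+ m = 1.
  apply/eqP; rewrite -order_dvdn.
  have : (#[y] %| m * 2 ^ n)%N by rewrite -cardT -cardsT order_dvdG ?inE.
  by rewrite mulnC Gauss_dvdr // (p'nat_coprime y_2'elt) // pnatX pnat_id.
rewrite Pxy expgMn ?ym ?mulg1; last exact: abelianT_commute.
rewrite xj -expgM defS; apply/eqP; have := generator_coprime g (j * m); rewrite /generator => ->.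
by rewrite (pnat_coprime g_2elt) // p'natE // dvdn2 oddM j_odd m_odd.
Qed.

End AbelianGroups.

Lemma ec_add_self_eq_None (F : fieldType) (a x y : F) : has_edwards_model a ->
  on_curve a 0 (Some (x, y)) -> ec_add a (Some (x, y)) (Some (x, y)) = None -> x = 0 /\ y = 0.
Proof.
case=> sqr_neq_N1 [r [w [-> r_neq0 _]]]; rewrite on_curve0 /= eqxx => /eqP e.
have [y_Ny _ | //] := eqVneq y (- y).
have y0 : y = 0.
  apply/eqP; move/eqP: y_Ny; rewrite -addr_eq0 -mulr2n -mulr_natl mulf_eq0.
  by rewrite (negbTE (two_neq0 sqr_neq_N1)).
split=> //; apply/eqP; move: e; rewrite y0 expr0n /= => /esym/eqP.
rewrite (_ : _ + _ = x * (x ^+ 2 + r ^+ 2)); last by ring.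
rewrite mulf_eq0 => /orP[// | /eqP/(sqr_add_eq0 sqr_neq_N1)[_ r0]].
by move: r_neq0; rewrite r0 eqxx.
Qed.

Section CurveGroupSylow.
Variables (F : finFieldType) (a : F) (model : has_edwards_model a).
Local Notation G := (ec_group model).

Lemma ec_group_pcore2_cyclic : cyclic 'O_2([set: G])%g.
Proof.
apply: (abelian_pgroup_cyclic (ec_group_abelian model) (p := 2)) => //; first exact: pcore_pgroup.
have o00 : on_curve a 0 (Some (0, 0)) by rewrite on_curve0; apply/eqP; ring.
pose T0 : G := exist _ (Some (0, 0)) o00.
apply: (@leq_trans #|[set 1%g; T0]|); last by rewrite cards2; case: (_ != _).
apply/subset_leq_card/subsetP => g; rewrite !inE => /andP[_ /eqP/(congr1 val) g2].
case: g g2 => -[[x y]|] og /= g2 //.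
by have [x0 y0] := ec_add_self_eq_None model og g2; apply/eqP/val_inj; rewrite /= x0 y0.
Qed.

Lemma ec_group_not_double (P : G) x y :
  val P = Some (x, y) -> ~ (exists s, s ^+ 2 = x) -> forall g : G, (g * g)%g != P.
Proof.
move=> Pxy x_nsq g; apply/eqP => /(congr1 val); rewrite Pxy => g2.
exact: x_nsq (ec_double_x_sqr (valP g) g2).
Qed.

Lemma generates_2sylow_of_pcore2 (Q : G) :
  'O_2([set: G])%g = <[Q]>%g -> generates_2sylow a 0 (val Q).
Proof.
move=> defS; have mem_S := mem_pcore_abelian (ec_group_abelian model) 2%N.
split.
  split; first exact: valP.
  have /p_natP[k ordQ] : (2.-elt Q)%g by rewrite -mem_S defS cycle_id.
  by exists k; rewrite -ec_group_expgE -ordQ expg_order.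
move=> R [oR [k Rk]]; pose R' : G := exist _ R oR.
have : R' \in <[Q]>%g.
  rewrite -defS mem_S; apply: (@pnat_dvd _ (2 ^ k)); last by rewrite pnatX pnat_id.
  by rewrite order_dvdn; apply/eqP/val_inj; rewrite ec_group_expgE.
by case/cycleP => j R'Q; exists j; rewrite -ec_group_expgE -R'Q.
Qed.

End CurveGroupSylow.

Lemma Fp_sqr_neq_N1 (p : nat) : prime p -> (p %% 4 = 3)%N -> forall i : 'F_p, i ^+ 2 != - 1.
Proof.
move=> p_pr p_mod4 i; apply/eqP => i2.
have i_neq0 : i != 0 by apply: contra_eq_neq i2 => ->; rewrite expr0n eq_sym oppr_eq0 oner_eq0.
have two_neq0 : 2 != 0 :> 'F_p.
  by rewrite -(dvdn_pcharf (pchar_Fp p_pr)); apply/negP => /dvdn_leq; lia.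
have : i ^+ p = - i.
  have -> : i ^+ p = i ^+ (p %/ 4 * 4 + 3) by congr (_ ^+ _); rewrite {1}(divn_eq p 4) p_mod4.
  rewrite exprD mulnC exprM (exprM i 2 2) i2 sqrrN !expr1n mul1r.
  by rewrite exprSr i2 mulN1r.
have := expf_card i; rewrite card_Fp // => -> /eqP.
by rewrite -addr_eq0 -mulr2n -mulr_natl mulf_eq0 (negbTE two_neq0) (negbTE i_neq0).
Qed.

Lemma mul_pow2_sub1_mod4 (m n : nat) : (0 < m -> 1 < n -> (m * 2 ^ n - 1) %% 4 = 3)%N.
Proof.
move=> m_gt0 n_gt1; rewrite -(subnKC n_gt1) expnD mulnCA.
have : (0 < m * 2 ^ (n - 2))%N by rewrite muln_gt0 m_gt0 expn_gt0.
move: (m * 2 ^ (n - 2))%N => K K_gt0.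
by rewrite (_ : (2 ^ 2 * K - 1 = (K - 1) * 4 + 3)%N) ?modnMDl //; lia.
Qed.

Unset Implicit Arguments.

Theorem corollary1 (m n : nat) (hm : (0 < m)%N) (hmodd : odd m) (hn : (1 < n)%N)
  (hp : prime (m * 2 ^ n - 1)) (t : 'F_(m * 2 ^ n - 1))
  (hsq : ~ exists s : 'F_(m * 2 ^ n - 1), s ^+ 2 = t ^+ 2 + 1) :
  generates_2sylow (- (t ^+ 2 + 1)) 0 (ec_mul (- (t ^+ 2 + 1)) m (Some (-1, t))).
Proof.
have sqr_neq_N1 := Fp_sqr_neq_N1 hp (mul_pow2_sub1_mod4 hm hn).
have model : has_edwards_model (- (t ^+ 2 + 1)).
  have [[r r2] | [r r2]] := sqr_or_oppr_sqr sqr_neq_N1 (t ^+ 2 + 1); first by case: hsq; exists r.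
  apply: (has_edwards_model_sqr sqr_neq_N1 (r := r)) => //.
  apply/eqP => r0; apply: hsq; exists 0.
  by rewrite expr0n /=; apply/esym/eqP; rewrite -oppr_eq0 -r2 r0 expr0n.
have oP : on_curve (- (t ^+ 2 + 1)) 0 (Some (-1, t)) by rewrite on_curve0; apply/eqP; ring.
pose P : ec_group model := exist _ (Some (-1, t)) oP.
rewrite -[Some _]/(val P) -ec_group_expgE; apply: generates_2sylow_of_pcore2.
apply: (pcore2_cycle_expg (ec_group_abelian model) (n := n)) => //.
- have : (0 < m * 2 ^ n)%N by rewrite muln_gt0 hm expn_gt0.
  by rewrite card_ec_group card_Fp //; lia.
- exact: ec_group_pcore2_cyclic.
- apply: (ec_group_not_double (x := -1) (y := t)) => // -[s s2].
  by move: (sqr_neq_N1 s); rewrite s2 eqxx.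
Qed.
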